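(* Let $H(z)$ be a function analytic at $0$ and let $A(z)=\sum_{n>0}a_nz^n$ be a formal power series whose coefficients satisfy \[ a_n \approx n^{\alpha n}\beta^n n^\gamma\,\tilde A(n^{-1}) \] for some $\alpha\in\mathbb{Z}_{>0}$, $\beta\in\mathbb{R}_{>0}$, $\gamma\in\mathbb{R}$ and nonzero formal power series $\tilde A(z)$. Define \[ \tilde A_j(z) = e^{-\alpha j}\beta^{-j} z^{\alpha j}(1-jz)^{\gamma-\alpha j}\, e^{\alpha z^{-1}(\log(1-jz)+jz)}\,\tilde A\!\left(\frac{z}{1-jz}\right), \qquad \tilde A_H(z) = \sum_{j\geq 0}\tilde A_j(z)\,[x^j]H'(A(x)). \] Then \[ [z^n]H(A(z)) \approx n^{\alpha n}\beta^n n^\gamma\,\tilde A_H(n^{-1}). \]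
   Context: For a formal power series $\tilde F(z)$, $f_n \approx b_n\tilde F(n^{-1})$ means that for every fixed $r\geq 0$, $f_n = b_n\big(\sum_{\ell=0}^{r-1}[z^\ell]\tilde F(z)\,n^{-\ell} + O(n^{-r})\big)$ as $n\to\infty$. $[x^j]F$ denotes the coefficient of $x^j$ in the formal power series $F$; $H(A(x))$ and $H'(A(x))$ are formal compositions (well defined since $A(0)=0$). The sum defining $\tilde A_H$ is a well-defined formal power series since $\tilde A_j(z)$ has valuation at least $\alpha j$. *)

From Stdlib Require Import Reals Lra Lia Arith Factorial.
Open Scope R_scope.

Fixpoint sumR (n : nat) (f : nat -> R) : R :=
  match n with O => 0 | S m => sumR m f + f m end.
Fixpoint prodR (n : nat) (f : nat -> R) : R :=
  match n with O => 1 | S m => prodR m f * f m end.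

Definition fps := nat -> R.

Definition fps_one : fps := fun n => match n with O => 1 | _ => 0 end.
Definition fps_add (f g : fps) : fps := fun n => f n + g n.
Definition fps_scale (c : R) (f : fps) : fps := fun n => c * f n.
Definition fps_mul (f g : fps) : fps :=
  fun n => sumR (S n) (fun i => f i * g (n - i)%nat).
Fixpoint fps_pow (f : fps) (k : nat) : fps :=
  match k with O => fps_one | S m => fps_mul f (fps_pow f m) end.
Definition fps_shift (k : nat) (f : fps) : fps :=
  fun n => if Nat.leb k n then f (n - k)%nat else 0.
(* division by z (used only for series with zero constant term) *)
Definition fps_divz (f : fps) : fps := fun n => f (S n).
Definition fps_deriv (f : fps) : fps := fun n => INR (S n) * f (S n).
(* formal composition f(g(z)), meaningful when g 0 = 0:
   [z^n] f(g) = sum_{k<=n} f_k [z^n] g^k *)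
Definition fps_comp (f g : fps) : fps :=
  fun n => sumR (S n) (fun k => f k * fps_pow g k n).
(* formal exponential exp(s), meaningful when s 0 = 0 *)
Definition fps_exp (s : fps) : fps :=
  fun n => sumR (S n) (fun m => fps_pow s m n / INR (fact m)).
Definition gbinom (p : R) (k : nat) : R :=
  prodR k (fun i => p - INR i) / INR (fact k).
(* (1 + c z)^p = sum_k binom(p,k) c^k z^k  (formal binomial series) *)
Definition fps_binom (c p : R) : fps := fun k => gbinom p k * c ^ k.
(* log(1 - c z) = - sum_{k>=1} c^k z^k / k *)
Definition fps_log1m (c : R) : fps :=
  fun k => match k with O => 0 | _ => - (c ^ k) / INR k end.
Definition fps_lin (c : R) : fps :=
  fun k => match k with 1%nat => c | _ => 0 end.
Definition fps_geom (c : R) : fps := fun k => c ^ k.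

(* f_n ≈ b_n F(1/n): for every r, f_n = b_n (sum_{l<r} F_l n^{-l} + O(n^{-r})) *)
Definition asymp_approx (f b : nat -> R) (F : fps) : Prop :=
  forall r : nat, exists C : R, exists N : nat, forall n : nat, (N <= n)%nat ->
    exists e : R,
      f n = b n * (sumR r (fun l => F l * / (INR n ^ l)) + e)
      /\ Rabs e <= C * / (INR n ^ r).

(* H analytic at 0, given by its Taylor coefficients h: positive radius *)
Definition analytic_at0 (h : fps) : Prop :=
  exists rho : R, 0 < rho /\ exists M : R, forall k : nat, Rabs (h k) * rho ^ k <= M.

Definition scale_seq (alpha : nat) (beta gamma : R) (n : nat) : R :=
  INR n ^ (alpha * n) * beta ^ n * Rpower (INR n) gamma.

Definition At_j (alpha : nat) (beta gamma : R) (At : fps) (j : nat) : fps :=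
  let a := INR alpha in
  let jr := INR j in
  fps_scale (exp (- a * jr) * / (beta ^ j))
    (fps_shift (alpha * j)
      (fps_mul (fps_binom (- jr) (gamma - a * jr))
        (fps_mul
          (fps_exp (fps_scale a (fps_divz (fps_add (fps_log1m jr) (fps_lin jr)))))
          (fps_comp At (fps_shift 1 (fps_geom jr)))))).

(* tilde A_H(z) = sum_{j>=0} tilde A_j(z) [x^j] H'(A(x)); since tilde A_j has
   valuation >= alpha j >= j, only j <= l contribute to [z^l]. *)
Definition At_H (alpha : nat) (beta gamma : R) (At h a : fps) : fps :=
  fun l => sumR (S l) (fun j => At_j alpha beta gamma At j l
                                 * fps_comp (fps_deriv h) a j).

(* Write [s_n = n^(alpha n) beta^n n^gamma] and split [A = T + L], where [T] keeps the coefficients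
   of degree [<= n - R].  Since [L] has valuation [> n - R] and [2R <= n], only the terms linear
   in [L] reach [z^n]:  [z^n] H(A) = [z^n] H(T) + sum_(j<R) [x^j]H'(A) a_(n-j).
   Each [a_(n-j) / s_n] expands in powers of [1/n] as [At_j]: the ratio [s_(n-j) / s_n] is the
   product of [e^(-alpha j) beta^(-j) n^(-alpha j)], [(1 - j/n)^(gamma - alpha j)] and
   [exp(alpha n (log(1 - j/n) + j/n))], each of which expands, and [At(1/(n-j))] is [At]
   composed with [z/(1 - jz)].
   For the remainder, [h] is majorized by [M/(1 - th z)] and [|a_i|] by [K beta^i D_i] with
   [D_i = (i+c)^(alpha(i+c))].  This sequence is log-convex and grows faster than [i D_(i-1)], so
   convolutions of it are dominated by their extreme terms (Bender's method), which gives
   [[z^n] H(T) = O(n beta^n D_(n-R)) = O(s_n n^-r)] for [R = r + 2c + 2]. *)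

From Stdlib Require Import Reals.
From Stdlib Require Import Lra Lia Arith FunctionalExtensionality.
Open Scope R_scope.

Lemma sumR_ext n f g : (forall i, (i < n)%nat -> f i = g i) -> sumR n f = sumR n g.
Proof.
  induction n; intros H; simpl; auto.
  rewrite IHn by (intros; apply H; lia). rewrite H by lia. reflexivity.
Qed.

Lemma sumR_add n f g : sumR n (fun i => f i + g i) = sumR n f + sumR n g.
Proof. induction n; simpl; [lra|]. rewrite IHn. lra. Qed.

Lemma sumR_sub n f g : sumR n (fun i => f i - g i) = sumR n f - sumR n g.
Proof. induction n; simpl; [lra|]. rewrite IHn. lra. Qed.

Lemma sumR_scal n c f : sumR n (fun i => c * f i) = c * sumR n f.
Proof. induction n; simpl; [lra|]. rewrite IHn. lra. Qed.

Lemma sumR_const n A : sumR n (fun _ => A) = INR n * A.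
Proof. induction n; cbn [sumR]; [simpl; ring|]. rewrite IHn, S_INR. ring. Qed.

Lemma sumR_eq0 n f : (forall i, (i < n)%nat -> f i = 0) -> sumR n f = 0.
Proof. intros H. rewrite (sumR_ext n f (fun _ => 0)), sumR_const by auto. ring. Qed.

Lemma sumR_split m n f : sumR (m + n) f = sumR m f + sumR n (fun i => f (m + i)%nat).
Proof.
  induction n; simpl.
  - rewrite Nat.add_0_r. lra.
  - rewrite Nat.add_succ_r. simpl. rewrite IHn. lra.
Qed.

Lemma sumR_recr n f : sumR (S n) f = sumR n f + f n.
Proof. reflexivity. Qed.

Lemma sumR_recl n f : sumR (S n) f = f 0%nat + sumR n (fun i => f (S i)).
Proof. induction n; simpl; [lra|]. simpl in IHn. rewrite IHn. lra. Qed.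

Lemma sumR_vanish_tail m n f : (m <= n)%nat -> (forall i, (m <= i < n)%nat -> f i = 0) ->
  sumR n f = sumR m f.
Proof.
  intros Hmn H. replace n with (m + (n - m))%nat by lia.
  rewrite sumR_split, (sumR_eq0 (n - m)); [lra|]. intros; apply H; lia.
Qed.

Lemma sumR_rev n f : sumR n f = sumR n (fun i => f (n - 1 - i)%nat).
Proof.
  induction n; auto.
  rewrite (sumR_recl n (fun i => f (S n - 1 - i)%nat)). cbn [sumR]. rewrite IHn.
  replace (S n - 1 - 0)%nat with n by lia.
  rewrite Rplus_comm. f_equal. apply sumR_ext. intros. f_equal. lia.
Qed.

Lemma sumR_swap n m f :
  sumR n (fun i => sumR m (fun j => f i j)) = sumR m (fun j => sumR n (fun i => f i j)).
Proof.
  induction n; simpl.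
  - symmetry. apply sumR_eq0. auto.
  - rewrite IHn, <- sumR_add. reflexivity.
Qed.

Lemma sumR_triangle_swap N (g : nat -> nat -> R) :
  sumR N (fun m => sumR (S m) (fun i => g i (m - i)%nat)) =
  sumR N (fun i => sumR (N - i) (fun j => g i j)).
Proof.
  induction N; auto.
  rewrite (sumR_recr N (fun m => sumR (S m) (fun i => g i (m - i)%nat))).
  rewrite (sumR_recr N (fun i => sumR (S N - i) (fun j => g i j))), IHN.
  rewrite (sumR_ext N (fun i => sumR (S N - i) (fun j => g i j))
              (fun i => sumR (N - i) (fun j => g i j) + g i (N - i)%nat)).
  2:{ intros i Hi. replace (S N - i)%nat with (S (N - i)) by lia. reflexivity. }
  rewrite sumR_add. replace (S N - N)%nat with 1%nat by lia.
  rewrite sumR_recr. replace (N - N)%nat with 0%nat by lia. simpl. lra.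
Qed.

Lemma sumR_abs n f : Rabs (sumR n f) <= sumR n (fun i => Rabs (f i)).
Proof.
  induction n; simpl; [rewrite Rabs_R0; lra|].
  eapply Rle_trans; [apply Rabs_triang | lra].
Qed.

Lemma sumR_le n f g : (forall i, (i < n)%nat -> f i <= g i) -> sumR n f <= sumR n g.
Proof.
  induction n; intros H; simpl; [lra|].
  assert (sumR n f <= sumR n g) by (apply IHn; intros; apply H; lia).
  assert (f n <= g n) by (apply H; lia). lra.
Qed.

Lemma sumR_ge0 n f : (forall i, (i < n)%nat -> 0 <= f i) -> 0 <= sumR n f.
Proof. intros H. rewrite <- (sumR_eq0 n (fun _ => 0)) by auto. apply sumR_le. auto. Qed.

Lemma sumR_ge_term n f k : (forall i, (i < n)%nat -> 0 <= f i) -> (k < n)%nat ->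
  f k <= sumR n f.
Proof.
  intros H Hk. replace n with (k + S (n - S k))%nat by lia.
  rewrite sumR_split, sumR_recl, Nat.add_0_r.
  assert (0 <= sumR k f) by (apply sumR_ge0; intros; apply H; lia).
  assert (0 <= sumR (n - S k) (fun i => f (k + S i)%nat)) by (apply sumR_ge0; intros; apply H; lia).
  lra.
Qed.

Lemma sumR_indicator_le n k A : 0 <= A ->
  sumR n (fun i => if Nat.ltb i k then A else 0) <= INR k * A.
Proof.
  intros HA. induction n; cbn [sumR].
  - simpl. apply Rmult_le_pos; auto. apply pos_INR.
  - destruct (Nat.ltb n k) eqn:E; [|lra].
    apply Nat.ltb_lt in E.
    assert (sumR n (fun i => if Nat.ltb i k then A else 0) <= INR n * A).
    { rewrite <- sumR_const. apply sumR_le. intros. destruct (Nat.ltb i k); lra. }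
    assert (INR n + 1 <= INR k) by (rewrite <- S_INR; apply le_INR; lia). nra.
Qed.

Lemma sumR_delta n k A : (k < n)%nat -> sumR n (fun i => if Nat.eqb i k then A else 0) = A.
Proof.
  intros H. replace n with (k + S (n - S k))%nat by lia.
  rewrite sumR_split, sumR_recl, Nat.add_0_r, Nat.eqb_refl.
  rewrite !sumR_eq0; [ring| |].
  - intros i _. destruct (Nat.eqb_spec (k + S i) k); [lia|reflexivity].
  - intros i Hi. destruct (Nat.eqb_spec i k); [lia|reflexivity].
Qed.

(** * Formal power series *)

Lemma fps_mul_comm F G : fps_mul F G = fps_mul G F.
Proof.
  apply functional_extensionality. intro n. unfold fps_mul.
  rewrite sumR_rev. apply sumR_ext. intros i Hi.
  replace (S n - 1 - i)%nat with (n - i)%nat by lia.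
  replace (n - (n - i))%nat with i by lia. lra.
Qed.

Lemma fps_mul_addl F G H : fps_mul (fps_add F G) H = fps_add (fps_mul F H) (fps_mul G H).
Proof.
  apply functional_extensionality. intro n. unfold fps_mul, fps_add.
  rewrite <- sumR_add. apply sumR_ext. intros. lra.
Qed.

Lemma fps_mul_addr F G H : fps_mul H (fps_add F G) = fps_add (fps_mul H F) (fps_mul H G).
Proof. rewrite fps_mul_comm, fps_mul_addl, (fps_mul_comm F), (fps_mul_comm G). reflexivity. Qed.

Lemma fps_mul_scaler c F G : fps_mul G (fps_scale c F) = fps_scale c (fps_mul G F).
Proof.
  apply functional_extensionality. intro n. unfold fps_mul, fps_scale.
  rewrite <- sumR_scal. apply sumR_ext. intros. lra.
Qed.

Lemma fps_mul_assoc F G H : fps_mul F (fps_mul G H) = fps_mul (fps_mul F G) H.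
Proof.
  apply functional_extensionality. intro l. unfold fps_mul.
  pose proof (sumR_triangle_swap (S l) (fun i j => F i * G j * H (l - i - j)%nat)) as T.
  cbv beta in T. symmetry.
  rewrite (sumR_ext (S l) _
    (fun m => sumR (S m) (fun i => F i * G (m - i)%nat * H (l - i - (m - i))%nat))).
  2:{ intros m Hm. rewrite Rmult_comm, <- sumR_scal. apply sumR_ext. intros i Hi.
      replace (l - i - (m - i))%nat with (l - m)%nat by lia. lra. }
  rewrite T. apply sumR_ext. intros i Hi. rewrite <- sumR_scal.
  replace (S l - i)%nat with (S (l - i)) by lia. apply sumR_ext. intros j Hj. lra.
Qed.

Lemma fps_pow_1 F : fps_pow F 1 = F.
Proof.
  apply functional_extensionality. intro n. simpl. unfold fps_mul.
  rewrite sumR_rev, sumR_recl, sumR_eq0.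
  - replace (S n - 1 - 0)%nat with n by lia. rewrite Nat.sub_diag. simpl. ring.
  - intros i Hi. replace (n - (S n - 1 - S i))%nat with (S i) by lia. simpl. ring.
Qed.

Lemma fps_pow_0_pos F q : (0 < q)%nat -> fps_pow F 0 q = 0.
Proof. intros. simpl. unfold fps_one. destruct q; [lia|reflexivity]. Qed.

Lemma fps_mul_eq_upto m F G F' G' :
  (forall i, (i <= m)%nat -> F i = F' i) -> (forall i, (i <= m)%nat -> G i = G' i) ->
  forall q, (q <= m)%nat -> fps_mul F G q = fps_mul F' G' q.
Proof.
  intros HF HG q Hq. unfold fps_mul. apply sumR_ext. intros i Hi.
  rewrite HF, HG by lia. reflexivity.
Qed.

Lemma fps_pow_eq_upto m F F' : (forall i, (i <= m)%nat -> F i = F' i) ->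
  forall k q, (q <= m)%nat -> fps_pow F k q = fps_pow F' k q.
Proof.
  intros HF k. induction k; intros q Hq; simpl; auto.
  apply (fps_mul_eq_upto m); auto.
Qed.

Lemma fps_comp_eq_upto (f V V' : fps) m : (forall i, (i <= m)%nat -> V i = V' i) ->
  forall q, (q <= m)%nat -> fps_comp f V q = fps_comp f V' q.
Proof.
  intros H q Hq. unfold fps_comp. apply sumR_ext. intros k _. f_equal.
  apply (fps_pow_eq_upto m); auto.
Qed.

Lemma fps_mul_vanish d e F G :
  (forall i, (i < d)%nat -> F i = 0) -> (forall i, (i < e)%nat -> G i = 0) ->
  forall q, (q < d + e)%nat -> fps_mul F G q = 0.
Proof.
  intros HF HG q Hq. unfold fps_mul. apply sumR_eq0. intros i Hi.
  destruct (lt_dec i d); [rewrite HF | rewrite HG]; lia || lra.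
Qed.

Lemma fps_pow_vanish F : F 0%nat = 0 -> forall k q, (q < k)%nat -> fps_pow F k q = 0.
Proof.
  intros H0 k. induction k; intros q Hq; [lia|]. simpl.
  apply (fps_mul_vanish 1 k); auto. intros i Hi. replace i with 0%nat by lia. auto.
Qed.

Lemma fps_comp_0 (f V : fps) : fps_comp f V 0%nat = f 0%nat.
Proof. unfold fps_comp. simpl. unfold fps_one. ring. Qed.

Definition fps_abs (F : fps) : fps := fun n => Rabs (F n).

Lemma fps_mul_ge0 F G : (forall i, 0 <= F i) -> (forall i, 0 <= G i) ->
  forall q, 0 <= fps_mul F G q.
Proof. intros. unfold fps_mul. apply sumR_ge0. intros. apply Rmult_le_pos; auto. Qed.

Lemma fps_pow_ge0 F : (forall i, 0 <= F i) -> forall k q, 0 <= fps_pow F k q.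
Proof.
  intros H k. induction k; intros q; simpl.
  - unfold fps_one. destruct q; lra.
  - apply fps_mul_ge0; auto.
Qed.

Lemma fps_comp_ge0 (f V : fps) : (forall k, 0 <= f k) -> (forall i, 0 <= V i) ->
  forall q, 0 <= fps_comp f V q.
Proof.
  intros Hf HV q. unfold fps_comp. apply sumR_ge0. intros. apply Rmult_le_pos; auto.
  apply fps_pow_ge0; auto.
Qed.

Lemma fps_mul_le F G F' G' : (forall i, 0 <= F i <= F' i) -> (forall i, 0 <= G i <= G' i) ->
  forall q, fps_mul F G q <= fps_mul F' G' q.
Proof.
  intros HF HG q. unfold fps_mul. apply sumR_le. intros i Hi.
  destruct (HF i), (HG (q - i)%nat). apply Rmult_le_compat; auto.
Qed.

Lemma fps_mul_abs_le F G q : Rabs (fps_mul F G q) <= fps_mul (fps_abs F) (fps_abs G) q.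
Proof.
  unfold fps_mul. eapply Rle_trans; [apply sumR_abs|]. apply sumR_le. intros.
  unfold fps_abs. rewrite Rabs_mult. lra.
Qed.

Lemma fps_pow_abs_le F k q : Rabs (fps_pow F k q) <= fps_pow (fps_abs F) k q.
Proof.
  revert q. induction k; intros q; simpl.
  - unfold fps_one. destruct q; rewrite ?Rabs_R1, ?Rabs_R0; lra.
  - eapply Rle_trans; [apply fps_mul_abs_le|]. apply fps_mul_le; intros i.
    + unfold fps_abs. split; [apply Rabs_pos | lra].
    + split; [apply Rabs_pos | apply IHk].
Qed.

(** * Asymptotic expansions in powers of [1/n] *)

Definition trunc_eval (r : nat) (F : fps) (z : R) : R := sumR r (fun l => F l * z ^ l).

Definition coef_abs_sum (r : nat) (F : fps) : R := sumR r (fun l => Rabs (F l)).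

Definition expansion (x : nat -> R) (F : fps) (r : nat) : Prop :=
  exists C N, forall n, (N <= n)%nat ->
    Rabs (x n - trunc_eval r F (/ INR n)) <= C * (/ INR n) ^ r.

(* [expands x F] is the paper's [x_n ≈ F(1/n)] with [b_n = 1]. *)
Definition expands (x : nat -> R) (F : fps) : Prop := forall r, expansion x F r.

Lemma inv_INR_pos n : (1 <= n)%nat -> 0 < / INR n.
Proof. intros. apply Rinv_0_lt_compat. apply lt_0_INR. lia. Qed.

Lemma inv_INR_le1 n : (1 <= n)%nat -> / INR n <= 1.
Proof. intros. rewrite <- Rinv_1. apply Rinv_le_contravar; [lra|]. apply (le_INR 1). lia. Qed.

Lemma pow_le1 z k : 0 <= z <= 1 -> z ^ k <= 1.
Proof. intros. rewrite <- (pow1 k). apply pow_incr. lra. Qed.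

Lemma pow_le1_antimono z a b : 0 <= z <= 1 -> (a <= b)%nat -> z ^ b <= z ^ a.
Proof.
  intros Hz Hab. replace b with (a + (b - a))%nat by lia. rewrite pow_add.
  rewrite <- (Rmult_1_r (z ^ a)) at 2. apply Rmult_le_compat_l; [apply pow_le; lra|].
  apply pow_le1; lra.
Qed.

Lemma trunc_eval_abs_le r F z : 0 <= z <= 1 -> Rabs (trunc_eval r F z) <= coef_abs_sum r F.
Proof.
  intros Hz. unfold trunc_eval, coef_abs_sum. eapply Rle_trans; [apply sumR_abs|].
  apply sumR_le. intros i _. rewrite Rabs_mult. rewrite <- (Rmult_1_r (Rabs (F i))) at 2.
  apply Rmult_le_compat_l; [apply Rabs_pos|]. rewrite <- RPow_abs.
  apply pow_le1. split; [apply Rabs_pos | rewrite Rabs_right; lra].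
Qed.

Lemma trunc_eval_diff_le r r' F z : 0 <= z <= 1 -> (r' <= r)%nat ->
  Rabs (trunc_eval r F z - trunc_eval r' F z) <= coef_abs_sum r F * z ^ r'.
Proof.
  intros Hz Hr. unfold trunc_eval, coef_abs_sum.
  replace r with (r' + (r - r'))%nat by lia. rewrite !sumR_split.
  match goal with |- Rabs (?a + ?b - ?a) <= _ => replace (a + b - a) with b by ring end.
  assert (0 <= sumR r' (fun l => Rabs (F l))) by (apply sumR_ge0; intros; apply Rabs_pos).
  enough (sumR (r - r') (fun i => Rabs (F (r' + i)%nat * z ^ (r' + i))) <=
          sumR (r - r') (fun i => Rabs (F (r' + i)%nat)) * z ^ r').
  { pose proof (sumR_abs (r - r') (fun i => F (r' + i)%nat * z ^ (r' + i))).
    assert (0 <= z ^ r') by (apply pow_le; lra). nra. }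
  rewrite Rmult_comm, <- sumR_scal. apply sumR_le. intros i _.
  rewrite Rabs_mult, Rmult_comm. apply Rmult_le_compat_r; [apply Rabs_pos|].
  rewrite Rabs_right by (apply Rle_ge, pow_le; lra). apply pow_le1_antimono; auto; lia.
Qed.

Lemma trunc_eval_mul_diff_le r F G z : 0 <= z <= 1 ->
  Rabs (trunc_eval r F z * trunc_eval r G z - trunc_eval r (fps_mul F G) z)
  <= coef_abs_sum r F * coef_abs_sum r G * z ^ r.
Proof.
  intros Hz.
  assert (Hprod : trunc_eval r (fps_mul F G) z =
                  sumR r (fun i => F i * z ^ i * trunc_eval (r - i) G z)).
  { unfold trunc_eval, fps_mul.
    rewrite (sumR_ext r _ (fun m => sumR (S m) (fun i => F i * G (m - i)%nat * z ^ (i + (m - i))))).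
    2:{ intros m _. rewrite Rmult_comm, <- sumR_scal. apply sumR_ext. intros i Hi.
        replace (i + (m - i))%nat with m by lia. ring. }
    rewrite (sumR_triangle_swap r (fun i j => F i * G j * z ^ (i + j))).
    apply sumR_ext. intros i _. rewrite <- sumR_scal. apply sumR_ext. intros j _.
    cbv beta. rewrite pow_add. ring. }
  assert (Hz0 : forall k, 0 <= z ^ k) by (intros; apply pow_le; lra).
  rewrite Hprod. unfold trunc_eval at 1. rewrite Rmult_comm, <- sumR_scal, <- sumR_sub.
  unfold coef_abs_sum at 1. rewrite Rmult_assoc, Rmult_comm, <- sumR_scal.
  eapply Rle_trans; [apply sumR_abs|]. apply sumR_le. intros i Hi.
  replace (trunc_eval r G z * (F i * z ^ i) - F i * z ^ i * trunc_eval (r - i) G z)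
    with (F i * z ^ i * (trunc_eval r G z - trunc_eval (r - i) G z)) by ring.
  rewrite !Rabs_mult, (Rabs_right (z ^ i)) by (apply Rle_ge; auto).
  pose proof (trunc_eval_diff_le r (r - i) G z Hz ltac:(lia)).
  replace (coef_abs_sum r G * z ^ r * Rabs (F i))
    with (Rabs (F i) * z ^ i * (coef_abs_sum r G * z ^ (r - i))).
  2:{ replace (z ^ r) with (z ^ i * z ^ (r - i)) by (rewrite <- pow_add; f_equal; lia). ring. }
  apply Rmult_le_compat_l; [apply Rmult_le_pos; [apply Rabs_pos | auto] | auto].
Qed.

Lemma expansion_ext_coef x F G r : (forall l, (l < r)%nat -> F l = G l) ->
  expansion x F r -> expansion x G r.
Proof.
  intros H [C [N HC]]. exists C, N. intros n Hn.
  unfold trunc_eval. rewrite (sumR_ext r _ (fun l => F l * (/ INR n) ^ l)); [apply HC; auto|].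
  intros. rewrite H; auto.
Qed.

Lemma expansion_eventually_eq x y F r N0 : (forall n, (N0 <= n)%nat -> x n = y n) ->
  expansion x F r -> expansion y F r.
Proof.
  intros H [C [N HC]]. exists C, (Nat.max N N0). intros n Hn.
  rewrite <- H by lia. apply HC. lia.
Qed.

Lemma expansion_lower x F r r' : (r' <= r)%nat -> expansion x F r -> expansion x F r'.
Proof.
  intros Hr [C [N HC]]. exists (Rabs C + coef_abs_sum r F), (Nat.max N 1). intros n Hn.
  pose proof (inv_INR_pos n ltac:(lia)). pose proof (inv_INR_le1 n ltac:(lia)).
  specialize (HC n ltac:(lia)).
  pose proof (trunc_eval_diff_le r r' F (/ INR n) ltac:(lra) Hr).
  assert (C * (/ INR n) ^ r <= Rabs C * (/ INR n) ^ r').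
  { apply Rle_trans with (Rabs C * (/ INR n) ^ r).
    - apply Rmult_le_compat_r; [apply pow_le; lra | apply Rle_abs].
    - apply Rmult_le_compat_l; [apply Rabs_pos | apply pow_le1_antimono; [lra | auto]]. }
  replace (x n - trunc_eval r' F (/ INR n)) with
    ((x n - trunc_eval r F (/ INR n)) + (trunc_eval r F (/ INR n) - trunc_eval r' F (/ INR n)))
    by ring.
  eapply Rle_trans; [apply Rabs_triang | lra].
Qed.

Lemma expansion_bounded x F r : expansion x F r ->
  exists B N, forall n, (N <= n)%nat -> Rabs (x n) <= B.
Proof.
  intros [C [N HC]]. exists (Rabs C + coef_abs_sum r F), (Nat.max N 1). intros n Hn.
  pose proof (inv_INR_pos n ltac:(lia)). pose proof (inv_INR_le1 n ltac:(lia)).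
  specialize (HC n ltac:(lia)).
  pose proof (trunc_eval_abs_le r F (/ INR n) ltac:(lra)).
  assert (C * (/ INR n) ^ r <= Rabs C).
  { apply Rle_trans with (Rabs C * (/ INR n) ^ r).
    - apply Rmult_le_compat_r; [apply pow_le; lra | apply Rle_abs].
    - rewrite <- (Rmult_1_r (Rabs C)) at 2.
      apply Rmult_le_compat_l; [apply Rabs_pos | apply pow_le1; lra]. }
  replace (x n) with ((x n - trunc_eval r F (/ INR n)) + trunc_eval r F (/ INR n)) by ring.
  eapply Rle_trans; [apply Rabs_triang | lra].
Qed.

Lemma expansion_zero x r :
  (exists C N, forall n, (N <= n)%nat -> Rabs (x n) <= C * (/ INR n) ^ r) ->
  expansion x (fun _ => 0) r.
Proof.
  intros [C [N H]]. exists C, N. intros n Hn. unfold trunc_eval.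
  rewrite sumR_eq0 by (intros; ring). rewrite Rminus_0_r. auto.
Qed.

Lemma expansion_add x y F G r : expansion x F r -> expansion y G r ->
  expansion (fun n => x n + y n) (fps_add F G) r.
Proof.
  intros [C1 [N1 H1]] [C2 [N2 H2]]. exists (C1 + C2), (Nat.max N1 N2). intros n Hn.
  specialize (H1 n ltac:(lia)). specialize (H2 n ltac:(lia)).
  unfold trunc_eval, fps_add in *.
  rewrite (sumR_ext r _ (fun l => F l * (/ INR n) ^ l + G l * (/ INR n) ^ l)), sumR_add
    by (intros; ring).
  match goal with |- Rabs (_ - (?a + ?b)) <= _ =>
    replace (x n + y n - (a + b)) with ((x n - a) + (y n - b)) by ring end.
  eapply Rle_trans; [apply Rabs_triang | lra].
Qed.

Lemma expansion_scale x F c r : expansion x F r ->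
  expansion (fun n => c * x n) (fps_scale c F) r.
Proof.
  intros [C [N H]]. exists (Rabs c * C), N. intros n Hn. specialize (H n Hn).
  unfold trunc_eval, fps_scale in *.
  rewrite (sumR_ext r _ (fun l => c * (F l * (/ INR n) ^ l))), sumR_scal by (intros; ring).
  rewrite <- Rmult_minus_distr_l, Rabs_mult, Rmult_assoc.
  apply Rmult_le_compat_l; [apply Rabs_pos | auto].
Qed.

Lemma expansion_sum (J : nat) (x : nat -> nat -> R) (F : nat -> fps) r :
  (forall j, (j < J)%nat -> expansion (x j) (F j) r) ->
  expansion (fun n => sumR J (fun j => x j n)) (fun l => sumR J (fun j => F j l)) r.
Proof.
  induction J; intros H.
  - apply expansion_zero. exists 0, 0%nat. intros. simpl. rewrite Rabs_R0. lra.
  - apply (expansion_add (fun n => sumR J (fun j => x j n)) (x J)); auto.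
Qed.

Lemma expansion_one r : expansion (fun _ => 1) fps_one r.
Proof.
  exists 1, 1%nat. intros n Hn. destruct r; unfold trunc_eval.
  - simpl. rewrite Rminus_0_r, Rabs_R1. lra.
  - rewrite sumR_recl, sumR_eq0 by (intros; simpl; ring).
    simpl. rewrite Rminus_diag_eq, Rabs_R0 by ring. rewrite Rmult_1_l.
    apply (pow_le _ (S r)). left. apply inv_INR_pos. lia.
Qed.

Lemma expansion_mul x y F G r : expansion x F r -> expansion y G r ->
  expansion (fun n => x n * y n) (fps_mul F G) r.
Proof.
  intros Hx Hy.
  destruct (expansion_bounded y G r Hy) as [B [Nb Hb]].
  destruct Hx as [C1 [N1 H1]], Hy as [C2 [N2 H2]].
  exists (Rabs C1 * B + coef_abs_sum r F * Rabs C2 + coef_abs_sum r F * coef_abs_sum r G),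
    (Nat.max (Nat.max N1 N2) (Nat.max Nb 1)).
  intros n Hn.
  pose proof (inv_INR_pos n ltac:(lia)). pose proof (inv_INR_le1 n ltac:(lia)).
  set (z := / INR n) in *.
  specialize (H1 n ltac:(lia)). specialize (H2 n ltac:(lia)). specialize (Hb n ltac:(lia)).
  pose proof (trunc_eval_mul_diff_le r F G z ltac:(lra)).
  pose proof (trunc_eval_abs_le r F z ltac:(lra)).
  assert (Hzr : 0 <= z ^ r) by (apply pow_le; lra).
  replace (x n * y n - trunc_eval r (fps_mul F G) z) with
    ((x n - trunc_eval r F z) * y n + trunc_eval r F z * (y n - trunc_eval r G z)
     + (trunc_eval r F z * trunc_eval r G z - trunc_eval r (fps_mul F G) z)) by ring.
  assert (A1 : Rabs ((x n - trunc_eval r F z) * y n) <= Rabs C1 * B * z ^ r).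
  { rewrite Rabs_mult. replace (Rabs C1 * B * z ^ r) with ((Rabs C1 * z ^ r) * B) by ring.
    apply Rmult_le_compat; try apply Rabs_pos; auto.
    eapply Rle_trans; [apply H1 | apply Rmult_le_compat_r; auto; apply Rle_abs]. }
  assert (A2 : Rabs (trunc_eval r F z * (y n - trunc_eval r G z))
               <= coef_abs_sum r F * Rabs C2 * z ^ r).
  { rewrite Rabs_mult, Rmult_assoc. apply Rmult_le_compat; try apply Rabs_pos; auto.
    eapply Rle_trans; [apply H2 | apply Rmult_le_compat_r; auto; apply Rle_abs]. }
  eapply Rle_trans; [apply Rabs_triang|].
  eapply Rle_trans; [apply Rplus_le_compat_r, Rabs_triang | lra].
Qed.

Lemma expansion_pow x F k r : expansion x F r -> expansion (fun n => x n ^ k) (fps_pow F k) r.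
Proof.
  intros H. induction k; simpl; [apply expansion_one | apply expansion_mul; auto].
Qed.

Lemma trunc_eval_shift k m F z : trunc_eval (k + m) (fps_shift k F) z = z ^ k * trunc_eval m F z.
Proof.
  unfold trunc_eval. rewrite sumR_split, sumR_eq0.
  2:{ intros i Hi. unfold fps_shift. destruct (Nat.leb_spec k i); [lia | ring]. }
  rewrite <- sumR_scal, Rplus_0_l. apply sumR_ext. intros i Hi.
  unfold fps_shift. destruct (Nat.leb_spec k (k + i)); [|lia].
  replace (k + i - k)%nat with i by lia. rewrite pow_add. ring.
Qed.

Lemma expands_shift x F k : expands x F -> expands (fun n => x n * (/ INR n) ^ k) (fps_shift k F).
Proof.
  intros H r. destruct (le_lt_dec r k) as [Hrk|Hrk].
  - destruct (expansion_bounded x F 0 (H 0%nat)) as [B [N HB]].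
    apply expansion_ext_coef with (fun _ => 0).
    { intros l Hl. unfold fps_shift. destruct (Nat.leb_spec k l); [lia | reflexivity]. }
    apply expansion_zero. exists B, (Nat.max N 1). intros n Hn.
    pose proof (inv_INR_pos n ltac:(lia)). pose proof (inv_INR_le1 n ltac:(lia)).
    specialize (HB n ltac:(lia)).
    rewrite Rabs_mult, (Rabs_right (_ ^ k)) by (apply Rle_ge, pow_le; lra).
    apply Rle_trans with (B * (/ INR n) ^ k).
    + apply Rmult_le_compat_r; [apply pow_le; lra | auto].
    + apply Rmult_le_compat_l; [pose proof (Rabs_pos (x n)); lra|].
      apply pow_le1_antimono; [lra | auto].
  - destruct (H (r - k)%nat) as [C [N HC]]. exists C, (Nat.max N 1). intros n Hn.
    pose proof (inv_INR_pos n ltac:(lia)).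
    replace r with (k + (r - k))%nat by lia. rewrite trunc_eval_shift, pow_add.
    replace (x n * (/ INR n) ^ k - (/ INR n) ^ k * trunc_eval (r - k) F (/ INR n))
      with ((/ INR n) ^ k * (x n - trunc_eval (r - k) F (/ INR n))) by ring.
    rewrite Rabs_mult, Rabs_right by (apply Rle_ge, pow_le; lra).
    replace (C * ((/ INR n) ^ k * (/ INR n) ^ (r - k)))
      with ((/ INR n) ^ k * (C * (/ INR n) ^ (r - k))) by ring.
    apply Rmult_le_compat_l; [apply pow_le; lra | apply HC; lia].
Qed.

Lemma expands_divz x F : F 0%nat = 0 -> expands x F -> expands (fun n => INR n * x n) (fps_divz F).
Proof.
  intros H0 H r. destruct (H (S r)) as [C [N HC]]. exists C, (Nat.max N 1). intros n Hn.
  assert (0 < INR n) by (apply lt_0_INR; lia).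
  specialize (HC n ltac:(lia)).
  replace (trunc_eval (S r) F (/ INR n)) with (/ INR n * trunc_eval r (fps_divz F) (/ INR n))
    in HC.
  2:{ unfold trunc_eval. rewrite sumR_recl, H0, <- sumR_scal, Rmult_0_l, Rplus_0_l.
      apply sumR_ext. intros. unfold fps_divz. simpl. ring. }
  replace (INR n * x n - trunc_eval r (fps_divz F) (/ INR n)) with
    (INR n * (x n - / INR n * trunc_eval r (fps_divz F) (/ INR n))) by (field; lra).
  rewrite Rabs_mult, Rabs_right by lra.
  apply Rmult_le_reg_l with (/ INR n); [apply Rinv_0_lt_compat; lra|].
  rewrite <- Rmult_assoc, Rinv_l, Rmult_1_l by lra. simpl in HC. lra.
Qed.

Lemma expands_lin c : expands (fun n => c * / INR n) (fps_lin c).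
Proof.
  intros r. exists (Rabs c), 1%nat. intros n Hn.
  pose proof (inv_INR_pos n Hn). pose proof (inv_INR_le1 n Hn).
  unfold trunc_eval. destruct r as [|[|r]].
  - simpl. rewrite Rminus_0_r, Rabs_mult, (Rabs_right (/ INR n)), Rmult_1_r by lra.
    rewrite <- (Rmult_1_r (Rabs c)) at 2. apply Rmult_le_compat_l; [apply Rabs_pos | lra].
  - simpl. unfold fps_lin.
    rewrite Rmult_0_l, Rplus_0_l, Rminus_0_r, Rabs_mult, (Rabs_right (/ INR n)) by lra. lra.
  - rewrite !sumR_recl, sumR_eq0 by (intros; unfold fps_lin; ring).
    unfold fps_lin. simpl. rewrite Rminus_diag_eq, Rabs_R0 by ring.
    apply Rmult_le_pos; [apply Rabs_pos | apply (pow_le _ (S (S r))); lra].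
Qed.

Lemma geom_sum u m : (1 - u) * sumR m (fun i => u ^ i) = 1 - u ^ m.
Proof. induction m; simpl; [ring|]. rewrite Rmult_plus_distr_l, IHm. ring. Qed.

Lemma trunc_eval_dilate r F c z :
  trunc_eval r (fun k => F k * c ^ k) z = trunc_eval r F (c * z).
Proof. unfold trunc_eval. apply sumR_ext. intros. rewrite Rpow_mult_distr. ring. Qed.

Lemma ratio_le_half (j n : nat) : (1 <= n)%nat -> (2 * j <= n)%nat ->
  0 <= INR j * / INR n <= / 2.
Proof.
  intros H1 H2. assert (0 < INR n) by (apply lt_0_INR; lia).
  split; [apply Rmult_le_pos; [apply pos_INR | left; apply Rinv_0_lt_compat; lra]|].
  apply Rmult_le_reg_r with (INR n); auto. rewrite Rmult_assoc, Rinv_l by lra.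
  assert (2 * INR j <= INR n).
  { replace (2 * INR j) with (INR (2 * j)) by (rewrite mult_INR; simpl; ring). apply le_INR. lia. }
  lra.
Qed.

Lemma expands_geom (j : nat) : expands (fun n => / (1 - INR j * / INR n)) (fps_geom (INR j)).
Proof.
  intros r. exists (2 * INR j ^ r), (Nat.max (2 * j) 1). intros n Hn.
  pose proof (ratio_le_half j n ltac:(lia) ltac:(lia)) as Hu.
  replace (trunc_eval r (fps_geom (INR j)) (/ INR n)) with
    (sumR r (fun i => (INR j * / INR n) ^ i)).
  2:{ unfold trunc_eval, fps_geom. apply sumR_ext. intros. rewrite Rpow_mult_distr. ring. }
  set (u := INR j * / INR n) in *.
  assert (E : / (1 - u) - sumR r (fun i => u ^ i) = u ^ r * / (1 - u)).
  { apply Rmult_eq_reg_l with (1 - u); [|lra].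
    rewrite Rmult_minus_distr_l, geom_sum. field. lra. }
  assert (/ (1 - u) <= 2) by (replace 2 with (/ / 2) by field; apply Rinv_le_contravar; lra).
  assert (0 <= u ^ r) by (apply pow_le; lra).
  assert (0 < / (1 - u)) by (apply Rinv_0_lt_compat; lra).
  rewrite E, Rabs_mult, !Rabs_right by lra.
  replace (2 * INR j ^ r * (/ INR n) ^ r) with (u ^ r * 2) by (unfold u; rewrite Rpow_mult_distr; ring).
  apply Rmult_le_compat_l; lra.
Qed.

Lemma expands_inv_sub (j : nat) : expands (fun n => / INR (n - j)) (fps_shift 1 (fps_geom (INR j))).
Proof.
  intros r. eapply expansion_eventually_eq; [| apply (expands_shift _ _ 1 (expands_geom j))].
  instantiate (1 := S j). intros n Hn. simpl.
  rewrite minus_INR by lia.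
  assert (INR j < INR n) by (apply lt_INR; lia).
  assert (0 < INR n) by (apply lt_0_INR; lia).
  field. split; lra.
Qed.

Lemma expands_reparam x F (j : nat) : expands x F ->
  expands (fun n => x (n - j)%nat) (fps_comp F (fps_shift 1 (fps_geom (INR j)))).
Proof.
  intros H r. set (g := fps_shift 1 (fps_geom (INR j))).
  assert (Hg0 : g 0%nat = 0) by reflexivity.
  set (y := fun n => trunc_eval r F (/ INR (n - j))).
  assert (Hy : expansion y (fun q => sumR r (fun l => fps_scale (F l) (fps_pow g l) q)) r).
  { apply (expansion_sum r (fun l n => F l * (/ INR (n - j)) ^ l)). intros l _.
    apply expansion_scale, expansion_pow, expands_inv_sub. }
  destruct (H r) as [C [N HC]].
  assert (He : expansion (fun n => x (n - j)%nat - y n) (fun _ => 0) r).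
  { apply expansion_zero. exists (C * 2 ^ r), (Nat.max (N + j) (Nat.max (2 * j) 1)).
    intros n Hn. specialize (HC (n - j)%nat ltac:(lia)).
    assert (Hv : 0 < / INR (n - j)) by (apply inv_INR_pos; lia).
    assert (Hv2 : / INR (n - j) <= 2 * / INR n).
    { assert (Hn2 : INR n <= 2 * INR (n - j)).
      { replace (2 * INR (n - j)) with (INR (2 * (n - j))) by (rewrite mult_INR; simpl; ring).
        apply le_INR. lia. }
      assert (0 < INR (n - j)) by (apply lt_0_INR; lia).
      assert (0 < INR n) by (apply lt_0_INR; lia).
      apply Rmult_le_reg_l with (INR n * INR (n - j)); [nra|].
      field_simplify; try lra. }
    assert (C >= 0).
    { pose proof (Rabs_pos (x (n - j)%nat - trunc_eval r F (/ INR (n - j)))).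
      pose proof (pow_lt _ r Hv). nra. }
    eapply Rle_trans; [apply HC|]. rewrite Rmult_assoc. apply Rmult_le_compat_l; [lra|].
    rewrite <- Rpow_mult_distr. apply pow_incr. lra. }
  eapply expansion_eventually_eq with (N0 := 0%nat);
    [| eapply expansion_ext_coef; [| apply (expansion_add _ _ _ _ _ Hy He)]].
  - intros. simpl. ring.
  - intros q Hq. unfold fps_add, fps_comp, fps_scale. rewrite Rplus_0_r.
    rewrite (sumR_vanish_tail (S q) r); [reflexivity | lia |].
    intros i Hi. rewrite (fps_pow_vanish g Hg0 i q) by lia. ring.
Qed.

Lemma asymp_approx_iff_expands f b F : (forall n, (1 <= n)%nat -> b n <> 0) ->
  asymp_approx f b F <-> expands (fun n => f n / b n) F.
Proof.
  intros Hb.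
  assert (Hev : forall r n, sumR r (fun l => F l * / (INR n ^ l)) = trunc_eval r F (/ INR n)).
  { intros. unfold trunc_eval. apply sumR_ext. intros. rewrite pow_inv. reflexivity. }
  split; intros H r; destruct (H r) as [C [N HC]]; exists C, (Nat.max N 1); intros n Hn.
  - destruct (HC n ltac:(lia)) as [e [E1 E2]]. rewrite E1, Hev, pow_inv.
    replace (b n * (trunc_eval r F (/ INR n) + e) / b n - trunc_eval r F (/ INR n)) with e
      by (field; apply Hb; lia). auto.
  - exists (f n / b n - trunc_eval r F (/ INR n)). split.
    + rewrite Hev. field. apply Hb. lia.
    + rewrite <- pow_inv. apply HC. lia.
Qed.

Lemma expansion_trunc_eval_comp r F y G : G 0%nat = 0 -> expansion y G r ->
  expansion (fun n => trunc_eval r F (y n)) (fps_comp F G) r.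
Proof.
  intros HG0 Hy.
  eapply expansion_ext_coef;
    [| apply (expansion_sum r (fun l n => F l * y n ^ l) (fun l => fps_scale (F l) (fps_pow G l)))].
  - intros q Hq. unfold fps_comp, fps_scale.
    apply sumR_vanish_tail; [lia|].
    intros i Hi. rewrite (fps_pow_vanish G HG0 i q) by lia. ring.
  - intros l _. apply expansion_scale, expansion_pow, Hy.
Qed.

(** * Taylor remainders *)

Lemma derivable_pt_lim_ext f g x l : (forall t, f t = g t) ->
  derivable_pt_lim f x l -> derivable_pt_lim g x l.
Proof. intros H. replace g with f; auto. apply functional_extensionality. auto. Qed.

Lemma derivable_pt_lim_trunc_eval r F y :
  derivable_pt_lim (trunc_eval (S r) F) y (trunc_eval r (fps_deriv F) y).
Proof.
  induction r.
  - apply (derivable_pt_lim_ext (fct_cte (F 0%nat))).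
    + intros. unfold trunc_eval, fct_cte. simpl. ring.
    + apply derivable_pt_lim_const.
  - apply (derivable_pt_lim_ext
             (trunc_eval (S r) F + mult_real_fct (F (S r)) (fun t => t ^ S r))%F).
    + intros t. reflexivity.
    + replace (trunc_eval (S r) (fps_deriv F) y)
        with (trunc_eval r (fps_deriv F) y + F (S r) * (INR (S r) * y ^ Nat.pred (S r)))
        by (unfold trunc_eval, fps_deriv; simpl; ring).
      apply derivable_pt_lim_plus; [exact IHr|].
      apply derivable_pt_lim_scal, derivable_pt_lim_pow.
Qed.

Lemma mean_value_bound f f' a b K : a <= b ->
  (forall t, a <= t <= b -> derivable_pt_lim f t (f' t)) ->
  (forall t, a <= t <= b -> Rabs (f' t) <= K) ->
  Rabs (f b - f a) <= K * (b - a).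
Proof.
  intros [Hab|Hab] Hd Hk.
  - destruct (MVT_cor2 f f' a b Hab Hd) as [c [Hc1 Hc2]]. rewrite Hc1.
    rewrite Rabs_mult, (Rabs_right (b - a)) by lra.
    apply Rmult_le_compat_r; [lra | apply Hk; lra].
  - subst. rewrite Rminus_diag, Rabs_R0.
    assert (0 <= K) by (eapply Rle_trans; [apply Rabs_pos | apply (Hk b); lra]). lra.
Qed.

Lemma exp_le_exp x y : x <= y -> exp x <= exp y.
Proof. intros [H | ->]; [left; apply exp_increasing; auto | lra]. Qed.

Lemma ln_le_ln x y : 0 < x -> x <= y -> ln x <= ln y.
Proof. intros H [H' | ->]; [left; apply ln_increasing; auto | lra]. Qed.

Definition exp_coef : fps := fun m => / INR (fact m).

Lemma fps_deriv_exp_coef : fps_deriv exp_coef = exp_coef.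
Proof.
  apply functional_extensionality. intro m. unfold fps_deriv, exp_coef.
  rewrite fact_simpl, mult_INR.
  assert (0 < INR (fact m)) by (apply lt_0_INR, lt_O_fact).
  assert (0 < INR (S m)) by (apply lt_0_INR; lia).
  field. lra.
Qed.

Lemma exp_taylor_rem r y : -1 <= y <= 0 -> Rabs (exp y - trunc_eval r exp_coef y) <= (- y) ^ r.
Proof.
  revert y. induction r; intros y Hy.
  - unfold trunc_eval. simpl. rewrite Rminus_0_r, Rabs_right by (left; apply exp_pos).
    rewrite <- exp_0. apply exp_le_exp. lra.
  - set (g := fun t => exp t - trunc_eval (S r) exp_coef t).
    assert (g0 : g 0 = 0).
    { unfold g, trunc_eval. rewrite sumR_recl, sumR_eq0, exp_0.
      - unfold exp_coef. simpl. rewrite Rinv_1. ring.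
      - intros. simpl. ring. }
    assert (Hb : Rabs (g 0 - g y) <= (- y) ^ r * (0 - y)).
    { apply (mean_value_bound g (fun t => exp t - trunc_eval r exp_coef t)); [lra| |].
      - intros t Ht. unfold g.
        pattern exp_coef at 2. rewrite <- fps_deriv_exp_coef.
        apply derivable_pt_lim_minus; [apply derivable_pt_lim_exp | apply derivable_pt_lim_trunc_eval].
      - intros t Ht. eapply Rle_trans; [apply IHr; lra | apply pow_incr; lra]. }
    rewrite g0, Rminus_0_l, Rabs_Ropp in Hb. unfold g in Hb.
    replace ((- y) ^ S r) with ((- y) ^ r * (0 - y)) by (simpl; ring). exact Hb.
Qed.

Lemma fps_deriv_log1m : fps_deriv (fps_log1m 1) = fun _ => -1.
Proof.
  apply functional_extensionality. intro m. unfold fps_deriv, fps_log1m.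
  rewrite pow1. assert (0 < INR (S m)) by (apply lt_0_INR; lia). field. lra.
Qed.

Lemma log1m_taylor_rem r u : (1 <= r)%nat -> 0 <= u <= / 2 ->
  Rabs (ln (1 - u) - trunc_eval r (fps_log1m 1) u) <= 2 * u ^ r.
Proof.
  intros Hr Hu. destruct r as [|r]; [lia|].
  set (g := fun t => ln (1 - t) - trunc_eval (S r) (fps_log1m 1) t).
  assert (g0 : g 0 = 0).
  { unfold g, trunc_eval. rewrite Rminus_0_r, ln_1, sumR_eq0; [ring|].
    intros [|i] _; unfold fps_log1m; simpl; ring. }
  assert (Hb : Rabs (g u - g 0) <= 2 * u ^ r * (u - 0)).
  { apply (mean_value_bound g (fun t => / (1 - t) * (0 - 1) - trunc_eval r (fun _ => -1) t));
      [lra| |].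
    - intros t Ht. unfold g. rewrite <- fps_deriv_log1m.
      apply derivable_pt_lim_minus; [|apply derivable_pt_lim_trunc_eval].
      apply (derivable_pt_lim_comp (fun t => 1 - t) ln).
      + apply (derivable_pt_lim_ext (fct_cte 1 - id)%F); [intros; reflexivity|].
        apply derivable_pt_lim_minus; [apply derivable_pt_lim_const | apply derivable_pt_lim_id].
      + apply derivable_pt_lim_ln. lra.
    - intros t Ht.
      assert (E : / (1 - t) * (0 - 1) - trunc_eval r (fun _ => -1) t = - (t ^ r / (1 - t))).
      { apply Rmult_eq_reg_l with (1 - t); [|lra].
        replace (trunc_eval r (fun _ => -1) t) with (-1 * sumR r (fun i => t ^ i)).
        2:{ rewrite <- sumR_scal. unfold trunc_eval. apply sumR_ext. intros. ring. }
        replace ((1 - t) * (/ (1 - t) * (0 - 1) - -1 * sumR r (fun i => t ^ i)))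
          with (-1 + (1 - t) * sumR r (fun i => t ^ i)) by (field; lra).
        rewrite geom_sum. field. lra. }
      rewrite E, Rabs_Ropp. unfold Rdiv. rewrite Rabs_mult.
      rewrite Rabs_right by (apply Rle_ge, pow_le; lra).
      rewrite Rabs_right by (apply Rle_ge, Rlt_le, Rinv_0_lt_compat; lra).
      assert (/ (1 - t) <= 2) by (replace 2 with (/ / 2) by field; apply Rinv_le_contravar; lra).
      assert (t ^ r <= u ^ r) by (apply pow_incr; lra).
      assert (0 <= t ^ r) by (apply pow_le; lra).
      nra. }
  rewrite g0, !Rminus_0_r in Hb. unfold g in Hb.
  replace (2 * u ^ S r) with (2 * u ^ r * u) by (simpl; ring). exact Hb.
Qed.

Lemma gbinom_succ p i : INR (S i) * gbinom p (S i) = p * gbinom (p - 1) i.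
Proof.
  unfold gbinom.
  assert (Hprod : forall n, prodR (S n) (fun k => p - INR k) = p * prodR n (fun k => p - 1 - INR k)).
  { induction n; [simpl; ring|].
    change (prodR (S (S n)) (fun k => p - INR k)) with
      (prodR (S n) (fun k => p - INR k) * (p - INR (S n))).
    rewrite IHn, S_INR. simpl. ring. }
  rewrite Hprod, fact_simpl, mult_INR.
  assert (0 < INR (fact i)) by (apply lt_0_INR, lt_O_fact).
  assert (0 < INR (S i)) by (apply lt_0_INR; lia).
  field. lra.
Qed.

Lemma fps_deriv_binom p : fps_deriv (fps_binom (-1) p) = fps_scale (- p) (fps_binom (-1) (p - 1)).
Proof.
  apply functional_extensionality. intro i. unfold fps_deriv, fps_binom, fps_scale.
  rewrite <- Rmult_assoc, gbinom_succ. simpl. ring.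
Qed.

Lemma Rpower_1m_deriv p t : t < 1 ->
  derivable_pt_lim (fun t => Rpower (1 - t) p) t (- p * Rpower (1 - t) (p - 1)).
Proof.
  intros Ht.
  apply (derivable_pt_lim_ext (comp (fun x => Rpower x p) (fun t => 1 - t))); [reflexivity|].
  replace (- p * Rpower (1 - t) (p - 1)) with (p * Rpower (1 - t) (p - 1) * (0 - 1)) by ring.
  apply derivable_pt_lim_comp.
  - apply (derivable_pt_lim_ext (fct_cte 1 - id)%F); [intros; reflexivity|].
    apply derivable_pt_lim_minus; [apply derivable_pt_lim_const | apply derivable_pt_lim_id].
  - apply derivable_pt_lim_power. lra.
Qed.

Lemma Rpower_1m_le p u : 0 <= u <= / 2 -> Rpower (1 - u) p <= exp (Rabs p).
Proof.
  intros Hu. unfold Rpower. apply exp_le_exp.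
  assert (ln (1 - u) <= 0) by (rewrite <- ln_1; apply ln_le_ln; lra).
  assert (- 1 <= ln (1 - u)).
  { assert (ln 2 <= 1).
    { rewrite <- (ln_exp 1). apply ln_le_ln; [lra|]. pose proof (exp_ineq1_le 1). lra. }
    assert (ln (/ 2) <= ln (1 - u)) by (apply ln_le_ln; lra).
    rewrite ln_Rinv in * by lra. lra. }
  eapply Rle_trans; [apply Rle_abs|]. rewrite Rabs_mult.
  rewrite <- (Rmult_1_r (Rabs p)) at 2. apply Rmult_le_compat_l; [apply Rabs_pos|].
  apply Rabs_le. lra.
Qed.

Lemma trunc_eval_scale r c F z : trunc_eval r (fps_scale c F) z = c * trunc_eval r F z.
Proof. unfold trunc_eval, fps_scale. rewrite <- sumR_scal. apply sumR_ext. intros. ring. Qed.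

Lemma binom_taylor_rem r : forall p, exists C, forall u, 0 <= u <= / 2 ->
  Rabs (Rpower (1 - u) p - trunc_eval r (fps_binom (-1) p) u) <= C * u ^ r.
Proof.
  induction r; intros p.
  - exists (exp (Rabs p)). intros u Hu. unfold trunc_eval. simpl.
    rewrite Rminus_0_r, Rmult_1_r, Rabs_right by (left; apply exp_pos).
    apply Rpower_1m_le; auto.
  - destruct (IHr (p - 1)) as [C HC]. exists (Rabs p * Rabs C). intros u Hu.
    set (g := fun t => Rpower (1 - t) p - trunc_eval (S r) (fps_binom (-1) p) t).
    assert (g0 : g 0 = 0).
    { unfold g, trunc_eval. rewrite Rminus_0_r, sumR_recl, sumR_eq0.
      - unfold Rpower, fps_binom, gbinom. rewrite ln_1. simpl. rewrite Rmult_0_r, exp_0. field.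
      - intros. simpl. ring. }
    assert (Hb : Rabs (g u - g 0) <= Rabs p * Rabs C * u ^ r * (u - 0)).
    { apply (mean_value_bound g
        (fun t => - p * Rpower (1 - t) (p - 1) - trunc_eval r (fps_deriv (fps_binom (-1) p)) t));
        [lra| |].
      - intros t Ht. apply derivable_pt_lim_minus.
        + apply Rpower_1m_deriv. lra.
        + apply derivable_pt_lim_trunc_eval.
      - intros t Ht. rewrite fps_deriv_binom, trunc_eval_scale.
        replace (- p * Rpower (1 - t) (p - 1) - - p * trunc_eval r (fps_binom (-1) (p - 1)) t)
          with (- p * (Rpower (1 - t) (p - 1) - trunc_eval r (fps_binom (-1) (p - 1)) t)) by ring.
        rewrite Rabs_mult, Rabs_Ropp, Rmult_assoc.
        apply Rmult_le_compat_l; [apply Rabs_pos|].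
        eapply Rle_trans; [apply HC; lra|].
        apply Rle_trans with (Rabs C * t ^ r).
        * apply Rmult_le_compat_r; [apply pow_le; lra | apply Rle_abs].
        * apply Rmult_le_compat_l; [apply Rabs_pos | apply pow_incr; lra]. }
    rewrite g0, !Rminus_0_r in Hb. unfold g in Hb.
    replace (Rabs p * Rabs C * u ^ S r) with (Rabs p * Rabs C * u ^ r * u) by (simpl; ring).
    exact Hb.
Qed.

Lemma expands_exp y Sf : Sf 0%nat = 0 -> (exists N, forall n, (N <= n)%nat -> y n <= 0) ->
  expands y Sf -> expands (fun n => exp (y n)) (fps_exp Sf).
Proof.
  intros H0 [N0 HN0] H r.
  destruct (H 1%nat) as [C1 [N1 H1]].
  destruct (INR_unbounded (Rabs C1)) as [N2 HN2].
  assert (He : expansion (fun n => exp (y n) - trunc_eval r exp_coef (y n)) (fun _ => 0) r).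
  { apply expansion_zero. exists (Rabs C1 ^ r), (Nat.max (Nat.max N0 N1) (Nat.max N2 1)).
    intros n Hn.
    specialize (H1 n ltac:(lia)). specialize (HN0 n ltac:(lia)).
    assert (HnN2 : INR N2 <= INR n) by (apply le_INR; lia).
    assert (Hn0 : 0 < INR n) by (apply lt_0_INR; lia).
    unfold trunc_eval in H1. simpl in H1.
    rewrite H0, Rmult_0_l, Rplus_0_l, Rminus_0_r, !Rmult_1_r, Rabs_left1 in H1 by lra.
    assert (Hyb : - y n <= Rabs C1 * / INR n).
    { eapply Rle_trans; [apply H1|]. apply Rmult_le_compat_r; [|apply Rle_abs].
      left. apply Rinv_0_lt_compat. lra. }
    assert (Rabs C1 * / INR n <= 1).
    { apply Rmult_le_reg_r with (INR n); auto. rewrite Rmult_assoc, Rinv_l; lra. }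
    eapply Rle_trans; [apply exp_taylor_rem; lra|].
    rewrite <- Rpow_mult_distr. apply pow_incr. lra. }
  eapply expansion_eventually_eq with (N0 := 0%nat);
    [| eapply expansion_ext_coef;
       [| apply (expansion_add _ _ _ _ _ (expansion_trunc_eval_comp r exp_coef y Sf H0 (H r)) He)]].
  - intros. simpl. ring.
  - intros q Hq. unfold fps_add, fps_comp, fps_exp, exp_coef. rewrite Rplus_0_r.
    apply sumR_ext. intros. unfold Rdiv. ring.
Qed.

Lemma expands_log (j : nat) : expands (fun n => ln (1 - INR j * / INR n)) (fps_log1m (INR j)).
Proof.
  assert (Hr : forall r, (1 <= r)%nat ->
            expansion (fun n => ln (1 - INR j * / INR n)) (fps_log1m (INR j)) r).
  { intros r Hr. exists (2 * INR j ^ r), (Nat.max (2 * j) 1). intros n Hn.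
    pose proof (ratio_le_half j n ltac:(lia) ltac:(lia)) as Hu.
    replace (trunc_eval r (fps_log1m (INR j)) (/ INR n))
      with (trunc_eval r (fps_log1m 1) (INR j * / INR n)).
    - rewrite Rmult_assoc, <- Rpow_mult_distr. apply log1m_taylor_rem; auto.
    - rewrite <- trunc_eval_dilate. unfold trunc_eval. apply sumR_ext. intros [|k] _;
        unfold fps_log1m; [ring|].
      rewrite pow1. assert (0 < INR (S k)) by (apply lt_0_INR; lia). field. lra. }
  intros [|r]; [apply (expansion_lower _ _ 1); [lia | apply Hr; lia] | apply Hr; lia].
Qed.

Lemma expands_binom (j : nat) p :
  expands (fun n => Rpower (1 - INR j * / INR n) p) (fps_binom (- INR j) p).
Proof.
  intros r. destruct (binom_taylor_rem r p) as [C HC].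
  exists (C * INR j ^ r), (Nat.max (2 * j) 1). intros n Hn.
  pose proof (ratio_le_half j n ltac:(lia) ltac:(lia)) as Hu.
  replace (trunc_eval r (fps_binom (- INR j) p) (/ INR n))
    with (trunc_eval r (fps_binom (-1) p) (INR j * / INR n)).
  - rewrite Rmult_assoc, <- Rpow_mult_distr. auto.
  - rewrite <- trunc_eval_dilate. unfold trunc_eval, fps_binom. apply sumR_ext. intros k _.
    replace (- INR j) with (-1 * INR j) by ring. rewrite Rpow_mult_distr. ring.
Qed.

(** * Expansion of [a_(n-j) / s_n] *)

Lemma ln_le_sub1 x : 0 < x -> ln x <= x - 1.
Proof. intros H. pose proof (exp_ineq1_le (ln x)). rewrite exp_ln in * by auto. lra. Qed.

Lemma scale_seq_exp alpha beta gamma m : 0 < beta -> (1 <= m)%nat ->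
  scale_seq alpha beta gamma m =
  exp (INR (alpha * m) * ln (INR m) + INR m * ln beta + gamma * ln (INR m)).
Proof.
  intros Hb Hm. assert (0 < INR m) by (apply lt_0_INR; lia).
  unfold scale_seq. rewrite <- !Rpower_pow by auto. unfold Rpower. rewrite <- !exp_plus.
  reflexivity.
Qed.

Lemma scale_seq_pos alpha beta gamma m : 0 < beta -> (1 <= m)%nat ->
  0 < scale_seq alpha beta gamma m.
Proof. intros. rewrite scale_seq_exp by auto. apply exp_pos. Qed.

Lemma scale_seq_ratio alpha beta gamma (j n : nat) : 0 < beta -> (j < n)%nat ->
  scale_seq alpha beta gamma (n - j) / scale_seq alpha beta gamma n =
  exp (- INR alpha * INR j) * / beta ^ j *
  ((/ INR n) ^ (alpha * j) *
   (Rpower (1 - INR j * / INR n) (gamma - INR alpha * INR j) *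
    exp (INR alpha * (INR n * (ln (1 - INR j * / INR n) + INR j * / INR n))))).
Proof.
  intros Hb Hjn.
  assert (Hn : 0 < INR n) by (apply lt_0_INR; lia).
  assert (Hu : 0 < 1 - INR j * / INR n).
  { assert (INR j < INR n) by (apply lt_INR; lia).
    apply Rmult_lt_reg_r with (INR n); auto.
    rewrite Rmult_minus_distr_r, Rmult_assoc, Rinv_l by lra. lra. }
  assert (Hlm : ln (INR (n - j)) = ln (INR n) + ln (1 - INR j * / INR n)).
  { rewrite <- ln_mult by auto. f_equal. rewrite minus_INR by lia. field. lra. }
  rewrite !scale_seq_exp by (auto; lia).
  rewrite pow_inv, <- !Rpower_pow by (auto; apply Rinv_0_lt_compat; auto).
  unfold Rpower, Rdiv. rewrite <- !exp_Ropp, <- !exp_plus. f_equal.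
  rewrite Hlm, !mult_INR, !minus_INR by lia.
  field. lra.
Qed.

Lemma expands_shifted_term (x : nat -> R) alpha beta gamma At (j : nat) : 0 < beta ->
  expands (fun m => x m / scale_seq alpha beta gamma m) At ->
  expands (fun n => x (n - j)%nat / scale_seq alpha beta gamma n) (At_j alpha beta gamma At j).
Proof.
  intros Hb HA.
  set (y := fun m => x m / scale_seq alpha beta gamma m) in *.
  set (L := fps_add (fps_log1m (INR j)) (fps_lin (INR j))).
  assert (HL0 : L 0%nat = 0) by (unfold L, fps_add, fps_log1m, fps_lin; ring).
  assert (HL : expands (fun n => INR alpha * (INR n * (ln (1 - INR j * / INR n) + INR j * / INR n)))
                       (fps_scale (INR alpha) (fps_divz L))).
  { intros r. apply expansion_scale, expands_divz; auto.
    intros r'. apply expansion_add; [apply expands_log | apply expands_lin]. }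
  assert (HE : expands (fun n => exp (INR alpha * (INR n * (ln (1 - INR j * / INR n) + INR j * / INR n))))
                       (fps_exp (fps_scale (INR alpha) (fps_divz L)))).
  { apply expands_exp; auto.
    - unfold fps_scale, fps_divz, L, fps_add, fps_log1m, fps_lin. simpl. field.
    - exists (Nat.max (2 * j) 1). intros n Hn.
      pose proof (ratio_le_half j n ltac:(lia) ltac:(lia)).
      pose proof (ln_le_sub1 (1 - INR j * / INR n) ltac:(lra)).
      assert (0 <= INR n * - (ln (1 - INR j * / INR n) + INR j * / INR n))
        by (apply Rmult_le_pos; [apply pos_INR | lra]).
      pose proof (pos_INR alpha). nra. }
  pose proof (fun r => expansion_mul _ _ _ _ r (expands_binom j (gamma - INR alpha * INR j) r)
                 (expansion_mul _ _ _ _ r (HE r) (expands_reparam y At j HA r))) as HM.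
  intros r. unfold At_j. cbv zeta.
  eapply expansion_eventually_eq; [| apply expansion_scale, (expands_shift _ _ (alpha * j) HM)].
  instantiate (1 := S j). intros n Hn. cbv beta.
  assert (0 < scale_seq alpha beta gamma (n - j)) by (apply scale_seq_pos; auto; lia).
  assert (0 < scale_seq alpha beta gamma n) by (apply scale_seq_pos; auto; lia).
  replace (x (n - j)%nat / scale_seq alpha beta gamma n) with
    (scale_seq alpha beta gamma (n - j) / scale_seq alpha beta gamma n * y (n - j)%nat)
    by (unfold y; field; split; lra).
  rewrite scale_seq_ratio by (auto; lia). ring.
Qed.

(** * Log-convex majorants *)

Lemma finite_prefix_bound (x w : nat -> R) q0 : (forall q, 0 < w q) ->
  exists C, 0 <= C /\ forall q, (q < q0)%nat -> x q <= C * w q.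
Proof.
  intros Hw. set (f := fun q => Rabs (x q) / w q).
  assert (Hf : forall q, 0 <= f q).
  { intros. unfold f, Rdiv. apply Rmult_le_pos; [apply Rabs_pos | left; apply Rinv_0_lt_compat, Hw]. }
  exists (sumR q0 f). split; [apply sumR_ge0; auto|]. intros q Hq.
  eapply Rle_trans; [apply Rle_abs|].
  replace (Rabs (x q)) with (f q * w q) by (unfold f; field; apply Rgt_not_eq, Hw).
  apply Rmult_le_compat_r; [left; apply Hw | apply sumR_ge_term; auto].
Qed.

Lemma pow_succ_bernoulli x k : 0 <= x -> (x + 1) ^ k * (x + 1 - INR k) <= x ^ k * (x + 1).
Proof.
  intros Hx. induction k; [simpl; lra|].
  rewrite S_INR. simpl.
  assert (0 <= (x + 1) ^ k) by (apply pow_le; lra).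
  assert (x * ((x + 1) ^ k * (x + 1 - INR k)) <= x * (x ^ k * (x + 1)))
    by (apply Rmult_le_compat_l; lra).
  pose proof (pos_INR k). nra.
Qed.

(* With [x = m (m + 2)], so that [x + 1 = (m + 1)^2], this is [pow_succ_bernoulli]. *)
Lemma self_pow_log_convex (m : nat) : (1 <= m)%nat ->
  (INR (S m) ^ (S m)) ^ 2 <= INR m ^ m * INR (S (S m)) ^ (S (S m)).
Proof.
  intros Hm. set (y := INR m). assert (Hy : 1 <= y) by (apply (le_INR 1); lia).
  replace (INR (S m)) with (y + 1) by (unfold y; rewrite S_INR; ring).
  replace (INR (S (S m))) with (y + 2) by (unfold y; rewrite !S_INR; ring).
  set (x := y * (y + 2)).
  assert (Hx : 0 <= x) by (unfold x; nra).
  pose proof (pow_succ_bernoulli x m Hx) as B. fold y in B.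
  rewrite <- pow_mult. replace (S m * 2)%nat with (2 * S m)%nat by lia. rewrite pow_mult.
  replace ((y + 1) ^ 2) with (x + 1) by (unfold x; ring).
  replace ((y + 2) ^ S (S m)) with ((y + 2) ^ m * (y + 2) ^ 2)
    by (rewrite <- pow_add; f_equal; lia).
  rewrite <- Rmult_assoc, <- Rpow_mult_distr. fold x.
  assert (Hp : (x + 1) ^ 2 <= (x + 1 - y) * (y + 2) ^ 2) by (unfold x; nra).
  assert (0 <= (x + 1) ^ m) by (apply pow_le; lra).
  apply Rmult_le_reg_r with (x + 1); [lra|].
  apply Rle_trans with (((x + 1) ^ m * (x + 1 - y)) * (y + 2) ^ 2).
  - replace ((x + 1) ^ S m * (x + 1)) with ((x + 1) ^ m * (x + 1) ^ 2) by (simpl; ring).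
    rewrite Rmult_assoc. apply Rmult_le_compat_l; auto.
  - replace (x ^ m * (y + 2) ^ 2 * (x + 1)) with ((x ^ m * (x + 1)) * (y + 2) ^ 2) by ring.
    apply Rmult_le_compat_r; [apply pow_le; lra | auto].
Qed.

Definition growth (alpha c i : nat) : R := INR (i + c) ^ (alpha * (i + c)).

Lemma growth_pos alpha c i : 0 < growth alpha c i.
Proof.
  unfold growth. destruct (i + c)%nat as [|m].
  - rewrite Nat.mul_0_r. simpl. lra.
  - apply pow_lt, lt_0_INR. lia.
Qed.

Section Growth.
Variables (alpha c : nat).
Hypotheses (Ha : (1 <= alpha)%nat) (Hc : (1 <= c)%nat).
Let D := growth alpha c.
Let D_pos i : 0 < D i := growth_pos alpha c i.

Lemma growth_log_convex i : D (S i) ^ 2 <= D i * D (S (S i)).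
Proof.
  unfold D, growth. rewrite !(Nat.mul_comm alpha), !pow_mult.
  rewrite <- pow_mult, Nat.mul_comm, pow_mult, <- Rpow_mult_distr.
  apply pow_incr. split; [apply pow_le, pow_le, pos_INR|].
  replace (S i + c)%nat with (S (i + c)) by lia.
  replace (S (S i) + c)%nat with (S (S (i + c))) by lia.
  apply self_pow_log_convex. lia.
Qed.

Lemma growth_step a b : (a <= b)%nat -> D (S a) * D b <= D a * D (S b).
Proof.
  intros Hab. induction b.
  - replace a with 0%nat by lia. lra.
  - destruct (Nat.eq_dec a (S b)) as [->|]; [lra|].
    specialize (IHb ltac:(lia)).
    pose proof (growth_log_convex b). pose proof (D_pos a). pose proof (D_pos (S a)).
    pose proof (D_pos b). pose proof (D_pos (S b)). pose proof (D_pos (S (S b))).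
    simpl in H.
    apply Rmult_le_reg_r with (D b * D (S b)); [nra|].
    apply Rle_trans with (D a * D (S b) * (D (S b) * D (S b))).
    + replace (D (S a) * D (S b) * (D b * D (S b)))
        with ((D (S a) * D b) * (D (S b) * D (S b))) by ring.
      apply Rmult_le_compat_r; [nra | auto].
    + replace (D a * D (S (S b)) * (D b * D (S b)))
        with (D a * D (S b) * (D b * D (S (S b)))) by ring.
      apply Rmult_le_compat_l; [nra | lra].
Qed.

Lemma growth_split_le p s i : (s <= i)%nat -> (i <= p - s)%nat ->
  D i * D (p - i) <= D s * D (p - s).
Proof.
  assert (Hpush : forall t, (s + t <= p - s - t)%nat ->
            D (s + t) * D (p - (s + t)) <= D s * D (p - s)).
  { induction t; intros H; [rewrite Nat.add_0_r; lra|].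
    specialize (IHt ltac:(lia)).
    pose proof (growth_step (s + t) (p - (s + S t)) ltac:(lia)) as Hst.
    replace (S (s + t)) with (s + S t)%nat in Hst by lia.
    replace (S (p - (s + S t))) with (p - (s + t))%nat in Hst by lia.
    lra. }
  intros H1 H2. destruct (le_lt_dec i (p - i)).
  - pose proof (Hpush (i - s)%nat ltac:(lia)). replace (s + (i - s))%nat with i in * by lia. auto.
  - pose proof (Hpush (p - i - s)%nat ltac:(lia)) as Hp.
    replace (s + (p - i - s))%nat with (p - i)%nat in Hp by lia.
    replace (p - (p - i))%nat with i in Hp by lia. lra.
Qed.

Lemma growth_succ_ge i : INR (S i + c) * D i <= D (S i).
Proof.
  unfold D, growth. replace (alpha * (S i + c))%nat with (alpha + alpha * (i + c))%nat by lia.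
  rewrite pow_add.
  assert (1 <= INR (S i + c)) by (apply (le_INR 1); lia).
  apply Rmult_le_compat; [lra | apply pow_le, pos_INR | |].
  - rewrite <- (pow_1 (INR (S i + c))) at 1. apply Rle_pow; auto.
  - apply pow_incr. split; [apply pos_INR | apply le_INR; lia].
Qed.

Lemma growth_mono i j : (i <= j)%nat -> D i <= D j.
Proof.
  intros H. induction j; [replace i with 0%nat by lia; lra|].
  destruct (Nat.eq_dec i (S j)) as [->|]; [lra|].
  specialize (IHj ltac:(lia)).
  pose proof (growth_succ_ge j). pose proof (D_pos j).
  assert (1 <= INR (S j + c)) by (apply (le_INR 1); lia). nra.
Qed.

(* Bender's estimate: by log-convexity the convolution is dominated by its two extreme terms,
   and each of those is [O(D q / q)] by [growth_succ_ge]. *)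
Lemma growth_convolution_le q : (2 <= q)%nat ->
  INR (q - 1 + c) * sumR (q - 1) (fun i => D (S i) * D (q - S i)%nat)
  <= (2 * D 1%nat + D 2%nat) * D q.
Proof.
  intros Hq.
  set (X := D 1%nat * D (q - 1)%nat). set (Y := D 2%nat * D (q - 2)%nat).
  set (A := INR (q - 1 + c)).
  assert (Hterm : forall i, (i < q - 1)%nat -> D (S i) * D (q - S i)%nat <=
            (if Nat.eqb i 0 then X else 0) + (if Nat.eqb i (q - 2) then X else 0) + Y).
  { intros i Hi.
    assert (0 <= X) by (apply Rmult_le_pos; left; apply D_pos).
    assert (0 <= Y) by (apply Rmult_le_pos; left; apply D_pos).
    destruct (Nat.eqb_spec i 0) as [->|]; [destruct (Nat.eqb 0 (q - 2)); unfold X in *; lra|].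
    destruct (Nat.eqb_spec i (q - 2)) as [->|].
    - replace (S (q - 2)) with (q - 1)%nat by lia.
      replace (q - (q - 1))%nat with 1%nat by lia. unfold X in *. lra.
    - pose proof (growth_split_le q 2 (S i) ltac:(lia) ltac:(lia)). unfold X, Y in *. lra. }
  assert (Hsum : sumR (q - 1) (fun i => D (S i) * D (q - S i)%nat) <= 2 * X + INR (q - 1) * Y).
  { eapply Rle_trans; [apply sumR_le, Hterm|].
    rewrite !sumR_add, !sumR_delta, sumR_const by lia. lra. }
  assert (HX : A * D (q - 1)%nat <= D q).
  { pose proof (growth_succ_ge (q - 1)) as G. replace (S (q - 1)) with q in G by lia.
    assert (A <= INR (q + c)) by (apply le_INR; lia).
    pose proof (D_pos (q - 1)). nra. }
  assert (HY : A * (INR (q - 1) * D (q - 2)%nat) <= D q).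
  { pose proof (growth_succ_ge (q - 2)) as G. replace (S (q - 2)) with (q - 1)%nat in G by lia.
    replace (S (q - 2) + c)%nat with (q - 1 + c)%nat in G by lia. fold A in G.
    assert (INR (q - 1) <= A) by (apply le_INR; lia).
    pose proof (pos_INR (q - 1)). pose proof (D_pos (q - 1)). pose proof (D_pos q).
    assert (INR (q - 1) * D (q - 1)%nat <= D q) by (pose proof (HX); nra).
    nra. }
  assert (0 <= A) by apply pos_INR.
  pose proof (D_pos 1). pose proof (D_pos 2).
  apply Rle_trans with (A * (2 * X + INR (q - 1) * Y)); [apply Rmult_le_compat_l; auto|].
  unfold X, Y. nra.
Qed.

End Growth.

Definition fps_trunc (m : nat) (F : fps) : fps := fun i => if Nat.leb i m then F i else 0.

(* [f = M / (1 - th z)] satisfies [f(V) = M + th V f(V)]. *)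
Lemma fps_comp_geom_rec (M th : R) (V : fps) : V 0%nat = 0 -> forall q, (1 <= q)%nat ->
  fps_comp (fun k => M * th ^ k) V q =
  th * sumR (S q) (fun i => V i * fps_comp (fun k => M * th ^ k) V (q - i)%nat).
Proof.
  intros H0 q Hq. unfold fps_comp at 1. rewrite sumR_recl, fps_pow_0_pos, Rmult_0_r, Rplus_0_l
    by lia.
  rewrite (sumR_ext q _
    (fun k => sumR (S q) (fun i => th * (V i * (M * th ^ k * fps_pow V k (q - i)%nat))))).
  2:{ intros k Hk. simpl fps_pow. unfold fps_mul. rewrite <- sumR_scal.
      apply sumR_ext. intros. simpl pow. ring. }
  rewrite sumR_swap, <- sumR_scal. apply sumR_ext. intros i Hi.
  rewrite (sumR_ext q _ (fun k => (th * V i) * (M * th ^ k * fps_pow V k (q - i)%nat)))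
    by (intros; ring).
  rewrite sumR_scal, Rmult_assoc.
  destruct i as [|i]; [rewrite H0; ring|].
  f_equal. f_equal. unfold fps_comp. apply sumR_vanish_tail; [lia|].
  intros k Hk. rewrite (fps_pow_vanish V H0 k) by lia. ring.
Qed.

Section Majorant.
Variables (alpha c : nat) (beta K M th : R) (W : fps).
Hypotheses (Ha : (1 <= alpha)%nat) (Hc : (1 <= c)%nat) (Hb : 0 < beta) (HK : 0 <= K)
  (HM : 0 <= M) (Hth : 0 <= th) (HW0 : W 0%nat = 0) (HWn : forall i, 0 <= W i)
  (HWb : forall i, W i <= K * beta ^ i * growth alpha c i).

Let f := fun k : nat => M * th ^ k.
Let D := growth alpha c.
Let t := fun q => fps_comp f W q.
Let U := fun m q => fps_comp f (fps_trunc m W) q.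

Let D_pos i : 0 < D i := growth_pos alpha c i.
Let beta_pow_pos i : 0 < beta ^ i := pow_lt beta i Hb.

Let f_ge0 k : 0 <= f k := Rmult_le_pos _ _ HM (pow_le th k Hth).

Lemma maj_comp_ge0 q : 0 <= t q.
Proof. apply fps_comp_ge0; [exact f_ge0 | exact HWn]. Qed.

Lemma maj_trunc_ge0 m q : 0 <= U m q.
Proof.
  apply fps_comp_ge0; [exact f_ge0|].
  intros i. unfold fps_trunc. destruct (Nat.leb i m); [auto | lra].
Qed.

Lemma maj_comp_rec q : (1 <= q)%nat ->
  t q = th * (sumR (q - 1) (fun i => W (S i) * t (q - S i)%nat) + W q * M).
Proof.
  intros Hq. unfold t, f. rewrite (fps_comp_geom_rec M th W HW0 q) by lia.
  rewrite sumR_recl, HW0, Rmult_0_l, Rplus_0_l.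
  replace q with (S (q - 1)) at 1 by lia. rewrite sumR_recr.
  replace (S (q - 1)) with q by lia. rewrite Nat.sub_diag, fps_comp_0. simpl. ring.
Qed.

(* Once [q - 1 + c] exceeds [2 th K (2 D_1 + D_2)], both parts of [maj_comp_rec] are at most
   half of the claimed bound. *)
Lemma maj_comp_step Ct q : (2 <= q)%nat -> 2 * th * K * M <= Ct ->
  2 * th * K * (2 * D 1%nat + D 2%nat) <= INR (q - 1 + c) ->
  (forall i, (i < q)%nat -> t i <= Ct * beta ^ i * D i) -> t q <= Ct * beta ^ q * D q.
Proof.
  intros Hq HCt HA IH.
  set (conv := sumR (q - 1) (fun i => D (S i) * D (q - S i)%nat)).
  assert (Hconv : INR (q - 1 + c) * conv <= (2 * D 1%nat + D 2%nat) * D q)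
    by (apply growth_convolution_le; auto).
  assert (0 <= conv) by (apply sumR_ge0; intros; apply Rmult_le_pos; left; auto).
  assert (0 <= th * K * M) by (apply Rmult_le_pos; [apply Rmult_le_pos|]; auto).
  assert (Hsum : sumR (q - 1) (fun i => W (S i) * t (q - S i)%nat) <= K * Ct * beta ^ q * conv).
  { unfold conv. rewrite <- sumR_scal. apply sumR_le. intros i Hi.
    apply Rle_trans with ((K * beta ^ S i * D (S i)) * (Ct * beta ^ (q - S i) * D (q - S i)%nat)).
    - apply Rmult_le_compat; [auto | apply maj_comp_ge0 | apply HWb | apply IH; lia].
    - replace (beta ^ q) with (beta ^ S i * beta ^ (q - S i)) by (rewrite <- pow_add; f_equal; lia).
      lra. }
  assert (Hk : th * K * conv <= D q / 2).
  { assert (0 <= th * K) by (apply Rmult_le_pos; auto).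
    assert (HA0 : 0 < INR (q - 1 + c)) by (apply lt_0_INR; lia).
    pose proof (D_pos q).
    apply Rmult_le_reg_r with (INR (q - 1 + c)); auto.
    assert (th * K * conv * INR (q - 1 + c) <= th * K * ((2 * D 1%nat + D 2%nat) * D q))
      by (rewrite Rmult_assoc, (Rmult_comm conv); apply Rmult_le_compat_l; lra).
    assert (2 * th * K * (2 * D 1%nat + D 2%nat) * (D q / 2) <= INR (q - 1 + c) * (D q / 2))
      by (apply Rmult_le_compat_r; lra).
    lra. }
  assert (Hconv2 : th * (K * Ct * beta ^ q * conv) <= Ct * beta ^ q * D q / 2).
  { replace (th * (K * Ct * beta ^ q * conv)) with ((th * K * conv) * (Ct * beta ^ q)) by ring.
    replace (Ct * beta ^ q * D q / 2) with (D q / 2 * (Ct * beta ^ q)) by field.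
    apply Rmult_le_compat_r; [apply Rmult_le_pos; [lra | left; auto] | auto]. }
  assert (HWq : th * (W q * M) <= Ct * beta ^ q * D q / 2).
  { apply Rle_trans with ((th * K * M) * (beta ^ q * D q)).
    - replace (th * K * M * (beta ^ q * D q)) with (th * ((K * beta ^ q * D q) * M)) by ring.
      apply Rmult_le_compat_l; [auto | apply Rmult_le_compat_r; auto].
    - replace (Ct * beta ^ q * D q / 2) with ((Ct / 2) * (beta ^ q * D q)) by field.
      apply Rmult_le_compat_r; [left; apply Rmult_lt_0_compat; auto | lra]. }
  rewrite maj_comp_rec, Rmult_plus_distr_l by lia.
  pose proof (Rmult_le_compat_l th _ _ Hth Hsum). lra.
Qed.

Lemma maj_comp_bound : exists Ct, 0 <= Ct /\ forall q, t q <= Ct * beta ^ q * D q.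
Proof.
  destruct (INR_unbounded (2 * th * K * (2 * D 1%nat + D 2%nat))) as [N HN].
  destruct (finite_prefix_bound t (fun q => beta ^ q * D q) (Nat.max N 2)) as [C0 [HC0 Hpre]].
  { intros. apply Rmult_lt_0_compat; auto. }
  assert (0 <= th * K * M) by (apply Rmult_le_pos; [apply Rmult_le_pos|]; auto).
  exists (C0 + 2 * th * K * M). split; [lra|].
  intro q. induction q as [q IH] using (well_founded_induction lt_wf).
  destruct (lt_dec q (Nat.max N 2)) as [Hq|Hq].
  - eapply Rle_trans; [apply Hpre; auto|]. rewrite Rmult_assoc.
    apply Rmult_le_compat_r; [left; apply Rmult_lt_0_compat; auto | lra].
  - apply maj_comp_step; [lia | lra | | auto].
    assert (INR N <= INR (q - 1 + c)) by (apply le_INR; lia). lra.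
Qed.

Lemma maj_trunc_eq_low m q : (q <= m)%nat -> U m q = t q.
Proof.
  intros Hq. apply (fps_comp_eq_upto _ _ _ m); auto.
  intros i Hi. unfold fps_trunc. destruct (Nat.leb_spec i m); [auto | lia].
Qed.

Lemma maj_trunc_term_low C0 s p i : 0 <= C0 ->
  (forall s', (1 <= s' <= s)%nat -> forall p, (2 * s' <= p)%nat ->
     U (p - s')%nat p <= C0 * INR (S p) * beta ^ p * D (p - s')%nat) ->
  (1 <= i < S s)%nat -> (2 * S s <= p)%nat ->
  W i * U (p - S s)%nat (p - i)%nat
  <= K * C0 * INR (S p) * (D (S s) * beta ^ p * D (p - S s)%nat).
Proof.
  intros HC0 IH Hi Hp.
  pose proof (IH (S s - i)%nat ltac:(lia) (p - i)%nat ltac:(lia)) as HU.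
  replace (p - i - (S s - i))%nat with (p - S s)%nat in HU by lia.
  assert (HWi : W i <= K * beta ^ i * D (S s)).
  { eapply Rle_trans; [apply HWb|]. apply Rmult_le_compat_l.
    - apply Rmult_le_pos; [auto | left; apply beta_pow_pos].
    - apply growth_mono; auto. lia. }
  assert (HU2 : U (p - S s)%nat (p - i)%nat
                <= C0 * INR (S p) * beta ^ (p - i) * D (p - S s)%nat).
  { eapply Rle_trans; [apply HU|].
    pose proof (beta_pow_pos (p - i)). pose proof (D_pos (p - S s)).
    apply Rmult_le_compat_r; [lra|]. apply Rmult_le_compat_r; [lra|].
    apply Rmult_le_compat_l; [auto | apply le_INR; lia]. }
  apply Rle_trans with ((K * beta ^ i * D (S s)) *
                        (C0 * INR (S p) * beta ^ (p - i) * D (p - S s)%nat)).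
  - apply Rmult_le_compat; auto. apply maj_trunc_ge0.
  - right. replace (beta ^ p) with (beta ^ i * beta ^ (p - i))
      by (rewrite <- pow_add; f_equal; lia). ring.
Qed.

Lemma maj_trunc_term_high Ct s p i : 0 <= Ct -> (forall q, t q <= Ct * beta ^ q * D q) ->
  (S s <= i <= p - S s)%nat ->
  W i * U (p - S s)%nat (p - i)%nat <= K * Ct * (D (S s) * beta ^ p * D (p - S s)%nat).
Proof.
  intros HCt Ht Hi. rewrite maj_trunc_eq_low by lia.
  apply Rle_trans with ((K * beta ^ i * D i) * (Ct * beta ^ (p - i) * D (p - i)%nat)).
  - apply Rmult_le_compat; auto. apply maj_comp_ge0.
  - replace ((K * beta ^ i * D i) * (Ct * beta ^ (p - i) * D (p - i)%nat))
      with (K * Ct * beta ^ p * (D i * D (p - i)%nat))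
      by (replace (beta ^ p) with (beta ^ i * beta ^ (p - i))
            by (rewrite <- pow_add; f_equal; lia); ring).
    replace (K * Ct * (D (S s) * beta ^ p * D (p - S s)%nat))
      with (K * Ct * beta ^ p * (D (S s) * D (p - S s)%nat)) by ring.
    apply Rmult_le_compat_l.
    + apply Rmult_le_pos; [apply Rmult_le_pos|]; auto. left; apply beta_pow_pos.
    + apply growth_split_le; auto; lia.
Qed.

(* In the recurrence for [U (p - s) p], a term [i < s] falls under the bound for [s - i] in place
   of [s], while a term [i >= s] only sees untruncated coefficients and log-convexity applies. *)
Lemma maj_trunc_term_le Ct C0 s p i :
  0 <= Ct -> (forall q, t q <= Ct * beta ^ q * D q) -> 0 <= C0 ->
  (forall s', (1 <= s' <= s)%nat -> forall p, (2 * s' <= p)%nat ->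
     U (p - s')%nat p <= C0 * INR (S p) * beta ^ p * D (p - s')%nat) ->
  (2 * S s <= p)%nat ->
  fps_trunc (p - S s) W i * U (p - S s)%nat (p - i)%nat
  <= (if Nat.ltb i (S s) then K * C0 * INR (S p) * (D (S s) * beta ^ p * D (p - S s)%nat) else 0)
     + K * Ct * (D (S s) * beta ^ p * D (p - S s)%nat).
Proof.
  intros HCt Ht HC0 IH Hp.
  set (Q := D (S s) * beta ^ p * D (p - S s)%nat).
  assert (HQ : 0 <= Q) by (left; apply Rmult_lt_0_compat; [apply Rmult_lt_0_compat|]; auto).
  assert (HgA : 0 <= K * C0 * INR (S p) * Q).
  { pose proof (pos_INR (S p)). apply Rmult_le_pos; auto.
    apply Rmult_le_pos; [apply Rmult_le_pos|]; auto. }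
  assert (HgB : 0 <= K * Ct * Q) by (apply Rmult_le_pos; [apply Rmult_le_pos|]; auto).
  unfold fps_trunc. destruct (Nat.leb_spec i (p - S s)) as [Ei|Ei].
  - destruct (Nat.ltb_spec i (S s)) as [El|El].
    + destruct i as [|i]; [rewrite HW0, Rmult_0_l; lra|].
      pose proof (maj_trunc_term_low C0 s p (S i) HC0 IH ltac:(lia) Hp) as H. fold Q in H. lra.
    + pose proof (maj_trunc_term_high Ct s p i HCt Ht ltac:(lia)) as H. fold Q in H. lra.
  - destruct (Nat.ltb i (S s)); lra.
Qed.

Lemma maj_trunc_bound : forall s, exists C, 0 <= C /\
  forall s', (1 <= s' <= s)%nat -> forall p, (2 * s' <= p)%nat ->
  U (p - s')%nat p <= C * INR (S p) * beta ^ p * D (p - s')%nat.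
Proof.
  destruct maj_comp_bound as [Ct [HCt Ht]].
  induction s as [|s [C0 [HC0 IH]]]; [exists 0; split; [lra | intros; lia]|].
  set (C1 := th * K * D (S s) * (INR (S s) * C0 + Ct)).
  assert (HC1 : 0 <= C1).
  { unfold C1. pose proof (D_pos (S s)). pose proof (pos_INR (S s)).
    apply Rmult_le_pos; [apply Rmult_le_pos; [apply Rmult_le_pos|]|]; nra. }
  exists (C0 + C1). split; [lra|]. intros s' Hs' p Hp.
  assert (HR : 0 <= INR (S p) * beta ^ p * D (p - s')%nat).
  { pose proof (pos_INR (S p)). pose proof (beta_pow_pos p). pose proof (D_pos (p - s')).
    apply Rmult_le_pos; [apply Rmult_le_pos|]; lra. }
  replace ((C0 + C1) * INR (S p) * beta ^ p * D (p - s')%nat) with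
    (C0 * INR (S p) * beta ^ p * D (p - s')%nat + C1 * (INR (S p) * beta ^ p * D (p - s')%nat))
    by ring.
  pose proof (Rmult_le_pos _ _ HC1 HR).
  destruct (Nat.eq_dec s' (S s)) as [->|Hne]; [|pose proof (IH s' ltac:(lia) p Hp); lra].
  set (Q := D (S s) * beta ^ p * D (p - S s)%nat).
  assert (HT0 : fps_trunc (p - S s) W 0%nat = 0) by exact HW0.
  replace (U (p - S s)%nat p)
    with (th * sumR (S p) (fun i => fps_trunc (p - S s) W i * U (p - S s)%nat (p - i)%nat))
    by (symmetry; exact (fps_comp_geom_rec M th _ HT0 p ltac:(lia))).
  assert (Hs : sumR (S p) (fun i => fps_trunc (p - S s) W i * U (p - S s)%nat (p - i)%nat)
               <= INR (S s) * (K * C0 * INR (S p) * Q) + INR (S p) * (K * Ct * Q)).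
  { eapply Rle_trans.
    { apply sumR_le. intros i _. apply (maj_trunc_term_le Ct C0 s p i); auto. }
    fold Q. rewrite sumR_add, sumR_const.
    assert (0 <= K * C0 * INR (S p) * Q).
    { pose proof (pos_INR (S p)).
      apply Rmult_le_pos; [apply Rmult_le_pos; [apply Rmult_le_pos|]|]; auto.
      left; apply Rmult_lt_0_compat; [apply Rmult_lt_0_compat|]; auto. }
    pose proof (sumR_indicator_le (S p) (S s) (K * C0 * INR (S p) * Q) ltac:(auto)). lra. }
  assert (Hfin : th * (INR (S s) * (K * C0 * INR (S p) * Q) + INR (S p) * (K * Ct * Q))
                 = C1 * (INR (S p) * beta ^ p * D (p - S s)%nat)) by (unfold C1, Q; ring).
  pose proof (Rmult_le_compat_l th _ _ Hth Hs).
  pose proof (Rmult_le_pos _ _ HC0 HR). lra.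
Qed.

End Majorant.

(** * The tail of [A] and the remainder *)

(* Since [L] has valuation [> m], every product containing [L] twice vanishes below [2m + 2]. *)
Lemma fps_pow_add_linear T L m : (forall i, (i <= m)%nat -> L i = 0) ->
  forall k q, (q <= 2 * m + 1)%nat ->
  fps_pow (fps_add T L) (S k) q = fps_pow T (S k) q + INR (S k) * fps_mul L (fps_pow T k) q.
Proof.
  intros HL k. induction k; intros q Hq.
  - change (fps_mul L (fps_pow T 0)) with (fps_pow L 1). rewrite !fps_pow_1.
    unfold fps_add. simpl. ring.
  - change (fps_pow (fps_add T L) (S (S k)))
      with (fps_mul (fps_add T L) (fps_pow (fps_add T L) (S k))).
    rewrite (fps_mul_eq_upto (2 * m + 1) _ _ (fps_add T L)
      (fps_add (fps_pow T (S k)) (fps_scale (INR (S k)) (fps_mul L (fps_pow T k))))); auto.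
    rewrite fps_mul_addl, !fps_mul_addr, !fps_mul_scaler.
    assert (E1 : fps_mul T (fps_mul L (fps_pow T k)) = fps_mul L (fps_pow T (S k))).
    { simpl fps_pow. rewrite fps_mul_assoc, (fps_mul_comm T L), <- fps_mul_assoc. reflexivity. }
    assert (E2 : fps_mul L (fps_mul L (fps_pow T k)) q = 0).
    { apply (fps_mul_vanish (S m) (S m)); [intros; apply HL; lia | | lia].
      intros i Hi. apply (fps_mul_vanish (S m) 0); [intros; apply HL; lia | intros; lia | lia]. }
    rewrite E1. unfold fps_add, fps_scale. rewrite E2, !S_INR. simpl fps_pow. ring.
Qed.

Lemma fps_mul_high_coef (a G : fps) n R : (R <= n)%nat ->
  fps_mul (fun i => if Nat.leb i (n - R) then 0 else a i) G n =
  sumR R (fun j => a (n - j)%nat * G j).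
Proof.
  intros HR. unfold fps_mul. rewrite sumR_rev, (sumR_vanish_tail R (S n)); [| lia |].
  - apply sumR_ext. intros j Hj. replace (S n - 1 - j)%nat with (n - j)%nat by lia.
    replace (n - (n - j))%nat with j by lia.
    destruct (Nat.leb_spec (n - j) (n - R)); [lia | reflexivity].
  - intros j Hj. replace (S n - 1 - j)%nat with (n - j)%nat by lia.
    destruct (Nat.leb_spec (n - j) (n - R)); [ring | lia].
Qed.

Lemma fps_comp_split_tail (h a : fps) (n R : nat) : a 0%nat = 0 -> (1 <= R)%nat -> (2 * R <= n)%nat ->
  fps_comp h a n = fps_comp h (fps_trunc (n - R) a) n +
    sumR R (fun j => fps_comp (fps_deriv h) a j * a (n - j)%nat).
Proof.
  intros Ha0 HR Hn.
  set (m := (n - R)%nat). set (T := fps_trunc m a).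
  set (L := fun i => if Nat.leb i m then 0 else a i).
  assert (HaTL : a = fps_add T L).
  { apply functional_extensionality. intro i. unfold fps_add, T, L, fps_trunc.
    destruct (Nat.leb i m); ring. }
  assert (HL : forall i, (i <= m)%nat -> L i = 0).
  { intros i Hi. unfold L. destruct (Nat.leb_spec i m); [reflexivity | lia]. }
  assert (HLT : forall k, fps_mul L (fps_pow T k) n = sumR R (fun j => a (n - j)%nat * fps_pow a k j)).
  { intro k. unfold L, m. rewrite fps_mul_high_coef by lia. apply sumR_ext. intros j Hj.
    f_equal. symmetry. apply (fps_pow_eq_upto m); [|lia].
    intros i Hi. unfold T, fps_trunc. destruct (Nat.leb_spec i m); [reflexivity | lia]. }
  unfold fps_comp at 1 2. rewrite !sumR_recl, !fps_pow_0_pos by lia.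
  rewrite (sumR_ext n _ (fun k => h (S k) * fps_pow T (S k) n +
             sumR R (fun j => h (S k) * INR (S k) * (a (n - j)%nat * fps_pow a k j)))).
  2:{ intros k Hk. rewrite sumR_scal, <- HLT. pattern a at 1. rewrite HaTL.
      rewrite (fps_pow_add_linear T L m HL) by (unfold m; lia). ring. }
  rewrite sumR_add, sumR_swap.
  replace (sumR R (fun j => sumR n (fun k => h (S k) * INR (S k) * (a (n - j)%nat * fps_pow a k j))))
    with (sumR R (fun j => fps_comp (fps_deriv h) a j * a (n - j)%nat)); [ring|].
  apply sumR_ext. intros j Hj. unfold fps_comp, fps_deriv.
  rewrite (sumR_vanish_tail (S j) n); [| lia |].
  - rewrite Rmult_comm, <- sumR_scal. apply sumR_ext. intros. ring.
  - intros k Hk. rewrite (fps_pow_vanish a Ha0 k j) by lia. ring.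
Qed.

Lemma analytic_at0_geom_bound h : analytic_at0 h ->
  exists M th, 0 <= M /\ 0 <= th /\ forall k, Rabs (h k) <= M * th ^ k.
Proof.
  intros [rho [Hrho [M HM]]]. exists M, (/ rho). repeat split.
  - specialize (HM 0%nat). simpl in HM. pose proof (Rabs_pos (h 0%nat)). lra.
  - left. apply Rinv_0_lt_compat. auto.
  - intros k. specialize (HM k). rewrite pow_inv.
    assert (0 < rho ^ k) by (apply pow_lt; auto).
    apply Rmult_le_reg_r with (rho ^ k); auto. rewrite Rmult_assoc, Rinv_l by lra. lra.
Qed.

Lemma fps_comp_trunc_abs_le (h a : fps) M th m n : (forall k, Rabs (h k) <= M * th ^ k) ->
  Rabs (fps_comp h (fps_trunc m a) n)
  <= fps_comp (fun k => M * th ^ k) (fps_trunc m (fps_abs a)) n.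
Proof.
  intros Hh. unfold fps_comp. eapply Rle_trans; [apply sumR_abs|]. apply sumR_le. intros k _.
  rewrite Rabs_mult. apply Rmult_le_compat; try apply Rabs_pos; auto.
  replace (fps_trunc m (fps_abs a)) with (fps_abs (fps_trunc m a)); [apply fps_pow_abs_le|].
  apply functional_extensionality. intro i. unfold fps_abs, fps_trunc.
  destruct (Nat.leb i m); auto. apply Rabs_R0.
Qed.

Lemma scale_seq_le_growth alpha c beta gamma n : (1 <= alpha)%nat -> (1 <= n)%nat -> 0 < beta ->
  gamma <= INR c ->
  scale_seq alpha beta gamma n <= beta ^ n * growth alpha c n.
Proof.
  intros Ha Hn Hb Hg. unfold scale_seq, growth.
  assert (H1 : 1 <= INR n) by (apply (le_INR 1); lia).
  assert (Rpower (INR n) gamma <= INR n ^ (alpha * c)).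
  { eapply Rle_trans; [apply Rle_Rpower; eauto|].
    rewrite Rpower_pow by lra. apply Rle_pow; auto. nia. }
  assert (INR n ^ (alpha * n) * INR n ^ (alpha * c) <= INR (n + c) ^ (alpha * (n + c))).
  { rewrite <- pow_add. replace (alpha * n + alpha * c)%nat with (alpha * (n + c))%nat by lia.
    apply pow_incr. split; [lra | apply le_INR; lia]. }
  assert (0 <= INR n ^ (alpha * n)) by (apply pow_le; lra).
  assert (0 < beta ^ n) by (apply pow_lt; auto).
  assert (INR n ^ (alpha * n) * Rpower (INR n) gamma <= INR n ^ (alpha * n) * INR n ^ (alpha * c))
    by (apply Rmult_le_compat_l; auto).
  nra.
Qed.

Lemma growth_tail_le_scale alpha c beta gamma r n : (1 <= alpha)%nat -> 0 < beta ->
  - INR c <= gamma -> (2 * (r + 2 * c + 2) <= n)%nat ->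
  INR (S n) * beta ^ n * growth alpha c (n - (r + 2 * c + 2))
  <= 2 * (/ INR n) ^ r * scale_seq alpha beta gamma n.
Proof.
  intros Ha Hb Hg Hn.
  assert (Hx : 1 <= INR n) by (apply (le_INR 1); lia).
  set (x := INR n) in *.
  assert (Hxp : forall k, 0 < x ^ k) by (intros; apply pow_lt; lra).
  assert (Hbn : 0 < beta ^ n) by (apply pow_lt; auto).
  assert (Hlow : x ^ (alpha * n) * beta ^ n * / x ^ c <= scale_seq alpha beta gamma n).
  { unfold scale_seq. fold x. apply Rmult_le_compat_l.
    - apply Rmult_le_pos; [apply pow_le | ]; lra.
    - rewrite <- Rpower_pow, <- Rpower_Ropp by lra. apply Rle_Rpower; lra. }
  assert (HD : growth alpha c (n - (r + 2 * c + 2)) <= x ^ (alpha * (n - (r + 2 * c + 2) + c))).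
  { apply pow_incr. split; [apply pos_INR | apply le_INR; lia]. }
  assert (HS : INR (S n) <= 2 * x) by (rewrite S_INR; fold x; lra).
  assert (Hexp : x ^ (1 + alpha * (n - (r + 2 * c + 2) + c)) * (x ^ r * x ^ c) <= x ^ (alpha * n)).
  { rewrite <- !pow_add. apply Rle_pow; auto. nia. }
  apply Rle_trans with (2 * x * beta ^ n * x ^ (alpha * (n - (r + 2 * c + 2) + c))).
  { pose proof (growth_pos alpha c (n - (r + 2 * c + 2))).
    apply Rmult_le_compat; [| lra | apply Rmult_le_compat_r |]; try lra.
    apply Rmult_le_pos; [apply pos_INR | lra]. }
  eapply Rle_trans; [| apply Rmult_le_compat_l; [| exact Hlow]].
  2:{ apply Rmult_le_pos; [lra | apply pow_le; left; apply Rinv_0_lt_compat; lra]. }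
  rewrite pow_inv.
  apply Rmult_le_reg_r with (x ^ r * x ^ c); [apply Rmult_lt_0_compat; auto|].
  replace (2 * / x ^ r * (x ^ (alpha * n) * beta ^ n * / x ^ c) * (x ^ r * x ^ c))
    with (2 * beta ^ n * x ^ (alpha * n))
    by (field; split; apply Rgt_not_eq, Hxp).
  replace (2 * x * beta ^ n * x ^ (alpha * (n - (r + 2 * c + 2) + c)) * (x ^ r * x ^ c))
    with (2 * beta ^ n * (x ^ (1 + alpha * (n - (r + 2 * c + 2) + c)) * (x ^ r * x ^ c)))
    by (rewrite pow_add; simpl; ring).
  apply Rmult_le_compat_l; [lra | exact Hexp].
Qed.

Lemma coef_growth_bound (a At : fps) alpha beta gamma c : (1 <= alpha)%nat -> 0 < beta ->
  gamma <= INR c -> expands (fun n => a n / scale_seq alpha beta gamma n) At ->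
  exists K, 0 <= K /\ forall i, fps_abs a i <= K * beta ^ i * growth alpha c i.
Proof.
  intros Ha Hb Hg Hasy. destruct (Hasy 0%nat) as [C [N HC]].
  assert (Hw : forall i, 0 < beta ^ i * growth alpha c i)
    by (intros; apply Rmult_lt_0_compat; [apply pow_lt; auto | apply growth_pos]).
  destruct (finite_prefix_bound (fps_abs a) _ (Nat.max N 1) Hw) as [K0 [HK0 Hpre]].
  exists (K0 + Rabs C). split; [pose proof (Rabs_pos C); lra|]. intros i.
  rewrite Rmult_assoc. pose proof (Hw i).
  destruct (lt_dec i (Nat.max N 1)) as [Hi|Hi].
  { eapply Rle_trans; [apply Hpre; auto|]. apply Rmult_le_compat_r; [lra|].
    pose proof (Rabs_pos C). lra. }
  specialize (HC i ltac:(lia)). unfold trunc_eval in HC. simpl in HC.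
  rewrite Rminus_0_r, Rmult_1_r in HC.
  assert (Hs : 0 < scale_seq alpha beta gamma i) by (apply scale_seq_pos; auto; lia).
  pose proof (scale_seq_le_growth alpha c beta gamma i Ha ltac:(lia) Hb Hg).
  unfold fps_abs.
  replace (a i) with (a i / scale_seq alpha beta gamma i * scale_seq alpha beta gamma i)
    by (field; lra).
  rewrite Rabs_mult, (Rabs_right (scale_seq _ _ _ _)) by lra.
  apply Rmult_le_compat; [apply Rabs_pos | lra | |lra].
  pose proof (Rle_abs C). pose proof (Rabs_pos C). lra.
Qed.

Lemma remainder_negligible h a At alpha beta gamma : analytic_at0 h -> a 0%nat = 0 ->
  (0 < alpha)%nat -> 0 < beta -> expands (fun n => a n / scale_seq alpha beta gamma n) At ->
  forall r, exists R, (r < R)%nat /\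
    expansion (fun n => fps_comp h (fps_trunc (n - R) a) n / scale_seq alpha beta gamma n)
              (fun _ => 0) r.
Proof.
  intros Hh Ha0 Halpha Hbeta Hasy r.
  destruct (analytic_at0_geom_bound h Hh) as [M [th [HM [Hth Hhb]]]].
  destruct (INR_unbounded (Rabs gamma)) as [c0 Hc0].
  set (c := Nat.max c0 1).
  assert (Hgc : Rabs gamma <= INR c) by (assert (INR c0 <= INR c) by (apply le_INR; lia); lra).
  assert (Hg1 : - INR c <= gamma) by (pose proof (Rle_abs (- gamma)); rewrite Rabs_Ropp in *; lra).
  assert (Hg2 : gamma <= INR c) by (pose proof (Rle_abs gamma); lra).
  destruct (coef_growth_bound a At alpha beta gamma c ltac:(lia) Hbeta Hg2 Hasy) as [K [HK HWb]].
  assert (HW0 : fps_abs a 0%nat = 0) by (unfold fps_abs; rewrite Ha0; apply Rabs_R0).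
  set (R := (r + 2 * c + 2)%nat).
  destruct (maj_trunc_bound alpha c beta K M th (fps_abs a) ltac:(lia) ltac:(lia) Hbeta HK HM Hth
              HW0 (fun i => Rabs_pos (a i)) HWb R) as [CR [HCR HU]].
  exists R. split; [lia|]. apply expansion_zero. exists (2 * CR), (2 * R)%nat. intros n Hn.
  assert (Hs : 0 < scale_seq alpha beta gamma n) by (apply scale_seq_pos; auto; lia).
  pose proof (growth_tail_le_scale alpha c beta gamma r n ltac:(lia) Hbeta Hg1 Hn).
  pose proof (fps_comp_trunc_abs_le h a M th (n - R) n Hhb).
  specialize (HU R ltac:(lia) n Hn).
  unfold Rdiv. rewrite Rabs_mult, (Rabs_right (/ _)) by (left; apply Rinv_0_lt_compat; lra).
  apply Rmult_le_reg_r with (scale_seq alpha beta gamma n); auto.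
  rewrite Rmult_assoc, Rinv_l, Rmult_1_r by lra.
  assert (CR * (INR (S n) * beta ^ n * growth alpha c (n - R)) <=
          CR * (2 * (/ INR n) ^ r * scale_seq alpha beta gamma n))
    by (apply Rmult_le_compat_l; auto).
  lra.
Qed.

Lemma At_H_finite_sum alpha beta gamma At h a R l : (0 < alpha)%nat -> (l < R)%nat ->
  At_H alpha beta gamma At h a l =
  sumR R (fun j => At_j alpha beta gamma At j l * fps_comp (fps_deriv h) a j).
Proof.
  intros Ha Hl. unfold At_H. symmetry. apply sumR_vanish_tail; [lia|].
  intros j Hj. unfold At_j, fps_scale at 1, fps_shift at 1. cbv zeta.
  destruct (Nat.leb_spec (alpha * j) l); [nia | ring].
Qed.

Theorem proposition12 (h a At : nat -> R) (alpha : nat) (beta gamma : R) :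
  analytic_at0 h ->
  a 0%nat = 0 ->
  (0 < alpha)%nat ->
  0 < beta ->
  (exists k : nat, At k <> 0) ->
  asymp_approx a (scale_seq alpha beta gamma) At ->
  asymp_approx (fps_comp h a) (scale_seq alpha beta gamma)
    (At_H alpha beta gamma At h a).
Proof.
  intros Hh Ha0 Halpha Hbeta _ Hasy.
  set (s := scale_seq alpha beta gamma).
  assert (Hs : forall n, (1 <= n)%nat -> s n <> 0)
    by (intros; apply Rgt_not_eq, scale_seq_pos; auto).
  apply asymp_approx_iff_expands in Hasy; auto. apply asymp_approx_iff_expands; auto.
  intros r.
  destruct (remainder_negligible h a At alpha beta gamma Hh Ha0 Halpha Hbeta Hasy r)
    as [R [HrR Hrem]].
  set (d := fun j => fps_comp (fps_deriv h) a j).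
  assert (Hmain : expansion (fun n => sumR R (fun j => d j * (a (n - j)%nat / s n)))
                    (fun l => sumR R (fun j => fps_scale (d j) (At_j alpha beta gamma At j) l)) r).
  { apply expansion_sum. intros j _. apply expansion_scale, expands_shifted_term; auto. }
  eapply expansion_eventually_eq with (N0 := (2 * R)%nat);
    [| eapply expansion_ext_coef; [| exact (expansion_add _ _ _ _ _ Hrem Hmain)]].
  - intros n Hn. rewrite (fps_comp_split_tail h a n R) by (auto; lia).
    unfold Rdiv. rewrite Rmult_plus_distr_r, (Rmult_comm (sumR _ _)), <- sumR_scal.
    f_equal. apply sumR_ext. intros j _. unfold d. ring.
  - intros l Hl. unfold fps_add. rewrite Rplus_0_l, (At_H_finite_sum _ _ _ _ _ _ R) by lia.
    apply sumR_ext. intros j _. unfold fps_scale, d. ring.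
Qed.
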